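(* Let $f:(0,\infty)\to\mathbb R$ be convex with $f(1)=0$, $n\ge2$ an integer, $\rho\ge1$. Then: (a) $\mathcal P_n(\rho)$ is non-empty, convex and compact. (b) For any $Q\in\mathcal P_n$ supported on $\mathcal A_n$, $D_f(\cdot\|Q)$ and $D_f(Q\|\cdot)$ attain their maxima over $\mathcal P_n(\rho)$. (c) Let $u_f(n,\rho):=\max_{Q\in\mathcal P_n(\rho)}D_f(Q\|U_n)$ and $v_f(n,\rho):=\max_{Q\in\mathcal P_n(\rho)}D_f(U_n\|Q)$. For $\rho>1$ let $\Gamma_n(\rho):=[\frac1{1+(n-1)\rho},\frac1n]$ and for $\beta\in\Gamma_n(\rho)$ let $i_\beta:=\lfloor\frac{1-n\beta}{(\rho-1)\beta}\rfloor$ and $Q_\beta(j):=\rho\beta$ for $j\le i_\beta$, $Q_\beta(i_\beta+1):=1-(n+i_\beta(\rho-1)-1)\beta$, $Q_\beta(j):=\beta$ for $i_\beta+2\le j\le n$. Then $Q_\beta\in\mathcal P_n(\rho)$, $u_f(n,\rho)=\max_{\beta\in\Gamma_n(\rho)}D_f(Q_\beta\|U_n)$ and $v_f(n,\rho)=\max_{\beta\in\Gamma_n(\rho)}D_f(U_n\|Q_\beta)$. (d) With $g_f^{(\rho)}(x):=xf\big(\frac{\rho}{1+(\rho-1)x}\big)+(1-x)f\big(\frac1{1+(\rho-1)x}\big)$, $x\in[0,1]$, and $f^\ast(t):=tf(1/t)$: $\max_{m\in\{0,\dots,n\}}g_f^{(\rho)}(\tfrac mn)\le u_f(n,\rho)\le\max_{x\in[0,1]}g_f^{(\rho)}(x)$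 and $\max_{m\in\{0,\dots,n\}}g_{f^\ast}^{(\rho)}(\tfrac mn)\le v_f(n,\rho)\le\max_{x\in[0,1]}g_{f^\ast}^{(\rho)}(x)$. (e) $\lim_{n\to\infty}u_f(n,\rho)=\max_{x\in[0,1]}g_f^{(\rho)}(x)$ and $\lim_{n\to\infty}v_f(n,\rho)=\max_{x\in[0,1]}\Big\{\frac{\rho x}{1+(\rho-1)x}f\big(\frac{1+(\rho-1)x}{\rho}\big)+\frac{(1-x)f(1+(\rho-1)x)}{1+(\rho-1)x}\Big\}$. (f) If $g_f^{(\rho)}$ is differentiable on $(0,1)$ with derivative bounded above by $K_f(\rho)\ge0$, then $0\le\lim_{n'\to\infty}u_f(n',\rho)-u_f(n,\rho)\le K_f(\rho)/n$. (g) With $f(0):=\lim_{t\to0}f(t)\in(-\infty,+\infty]$: $\lim_{\rho\to\infty}u_f(n,\rho)=(1-\frac1n)f(0)+\frac{f(n)}n$. If moreover $f(0)<\infty$, $f$ is differentiable on $(0,n)$ and $K_n:=\sup_{t\in(0,n)}|f'(t)|<\infty$, then for all $\rho\ge1$: $0\le\lim_{\rho'\to\infty}u_f(n,\rho')-u_f(n,\rho)\le\frac{2K_n(n-1)}{n+\rho-1}$. (h) If $f$ is twice differentiable and $0\le m\le f''(t)\le M$ for all $t\in[1/\rho,\rho]$, then for all $Q\in\mathcal P_n(\rho)$: $0\le\tfrac12m(n\|Q\|_2^2-1)\le D_f(Q\|U_n)\le\tfrac12M(n\|Q\|_2^2-1)\le\frac{M(\rho-1)^2}{8\rho}$, with equalities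 in the middle two inequalities for $\chi^2$ ($M=m=2$). (i) Let $d>0$. If $f$ is twice differentiable with $f''(t)\le M_f\in(0,\infty)$ for all $t>0$, then $D_f(Q\|U_n)\le d$ for all $Q\in\mathcal P_n(\rho)$ provided $\rho\le1+\frac{4d}{M_f}+\sqrt{\frac{8d}{M_f}+\frac{16d^2}{M_f^2}}$.
   Context: $\mathcal A_n:=\{1,\dots,n\}$, $\mathcal P_n$ is the set of probability mass functions on $\mathcal A_n$, $U_n$ is the uniform one, and for $\rho\ge1$, $\mathcal P_n(\rho)$ is the set of $Q\in\mathcal P_n$ with all masses positive and $q_{\max}/q_{\min}\le\rho$ ($q_{\max},q_{\min}$ the largest and smallest masses). $D_f(P\|Q)=\sum_xQ(x)f(P(x)/Q(x))$; $\|\cdot\|_2$ Euclidean norm. *)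

From Stdlib Require Import Reals Lra Lia Arith ClassicalEpsilon.
Open Scope R_scope.

Fixpoint rsum (n : nat) (F : nat -> R) : R :=
  match n with O => 0 | S k => rsum k F + F (S k) end.

Fixpoint qmax (n : nat) (F : nat -> R) : R :=
  match n with
  | O => 0
  | S k => match k with O => F 1%nat | _ => Rmax (qmax k F) (F (S k)) end
  end.
Fixpoint qmin (n : nat) (F : nat -> R) : R :=
  match n with
  | O => 0
  | S k => match k with O => F 1%nat | _ => Rmin (qmin k F) (F (S k)) end
  end.

(* A pmf on A_n = {1,...,n} is represented by its values at 1..n
   (values of the function outside 1..n are irrelevant). *)
Definition pmf (n : nat) (P : nat -> R) : Prop :=
  (forall i, (1 <= i <= n)%nat -> 0 <= P i) /\ rsum n P = 1.

Definition full_support (n : nat) (P : nat -> R) : Prop :=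
  forall i, (1 <= i <= n)%nat -> 0 < P i.

Definition Pnr (n : nat) (rho : R) (Q : nat -> R) : Prop :=
  pmf n Q /\ full_support n Q /\ qmax n Q / qmin n Q <= rho.

Definition Un (n : nat) : nat -> R := fun _ => / INR n.

Definition Df (f : R -> R) (n : nat) (P Q : nat -> R) : R :=
  rsum n (fun i => Q i * f (P i / Q i)).

Definition norm2 (n : nat) (Q : nat -> R) : R := sqrt (rsum n (fun i => Q i ^ 2)).

Definition convex_pos (f : R -> R) : Prop :=
  forall x y t, 0 < x -> 0 < y -> 0 <= t <= 1 ->
    f (t * x + (1 - t) * y) <= t * f x + (1 - t) * f y.

Definition is_max {T : Type} (S : T -> Prop) (F : T -> R) (m : R) : Prop :=
  (exists x, S x /\ F x = m) /\ (forall x, S x -> F x <= m).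

(* max_{x in S} F x  (meaningful when the maximum is attained) *)
Definition maxval {T : Type} (S : T -> Prop) (F : T -> R) : R :=
  epsilon (inhabits 0) (fun m => is_max S F m).

Definition unit_interval (x : R) : Prop := 0 <= x <= 1.

Definition uf (f : R -> R) (n : nat) (rho : R) : R :=
  maxval (Pnr n rho) (fun Q => Df f n Q (Un n)).
Definition vf (f : R -> R) (n : nat) (rho : R) : R :=
  maxval (Pnr n rho) (fun Q => Df f n (Un n) Q).

Definition Gamma_n (n : nat) (rho : R) (b : R) : Prop :=
  / (1 + (INR n - 1) * rho) <= b <= / INR n.

Definition i_beta (n : nat) (rho b : R) : nat :=
  Z.to_nat (Int_part ((1 - INR n * b) / ((rho - 1) * b))).

Definition Qbeta (n : nat) (rho b : R) : nat -> R :=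
  fun j =>
    let i := i_beta n rho b in
    if (j <=? i)%nat then rho * b
    else if (j =? S i)%nat then 1 - (INR n + INR i * (rho - 1) - 1) * b
    else b.

Definition gf (f : R -> R) (rho : R) (x : R) : R :=
  x * f (rho / (1 + (rho - 1) * x)) + (1 - x) * f (1 / (1 + (rho - 1) * x)).
Definition fstar (f : R -> R) (t : R) : R := t * f (1 / t).

(* the function whose maximum is lim v_f(n,rho) in (e) *)
Definition hv (f : R -> R) (rho : R) (x : R) : R :=
  rho * x / (1 + (rho - 1) * x) * f ((1 + (rho - 1) * x) / rho)
  + (1 - x) * f (1 + (rho - 1) * x) / (1 + (rho - 1) * x).

Definition chi2 (t : R) : R := (t - 1) ^ 2.

Definition seq_compact (n : nat) (A : (nat -> R) -> Prop) : Prop :=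
  forall Qs : nat -> nat -> R, (forall k, A (Qs k)) ->
    exists (phi : nat -> nat) (Q : nat -> R),
      (forall k, (phi k < phi (S k))%nat) /\ A Q /\
      forall i, (1 <= i <= n)%nat -> Un_cv (fun k => Qs (phi k) i) (Q i).

Definition convex_set (A : (nat -> R) -> Prop) : Prop :=
  forall P Q t, A P -> A Q -> 0 <= t <= 1 -> A (fun i => t * P i + (1 - t) * Q i).

Definition lim_right0 (f : R -> R) (L : R) : Prop :=
  forall eps, 0 < eps -> exists delta, 0 < delta /\
    forall t, 0 < t < delta -> Rabs (f t - L) < eps.
Definition div_right0 (f : R -> R) : Prop :=
  forall A, exists delta, 0 < delta /\ forall t, 0 < t < delta -> A < f t.
Definition lim_infty (F : R -> R) (L : R) : Prop :=
  forall eps, 0 < eps -> exists M, forall r, M <= r -> Rabs (F r - L) < eps.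
Definition div_infty (F : R -> R) : Prop :=
  forall A, exists M, forall r, M <= r -> A < F r.

Definition twice_diff_pos (f f1 f2 : R -> R) : Prop :=
  forall t, 0 < t -> derivable_pt_lim f t (f1 t) /\ derivable_pt_lim f1 t (f2 t).

From Stdlib Require Import Reals Lra Lia ClassicalEpsilon Classical ZArith.
From Coquelicot Require Import Coquelicot.
Open Scope R_scope.

(* For a fixed second argument, [P |-> D_f(P||Q)] is a sum of convex functions of the single
   masses, and so is [P |-> D_f(Q||P)]; such a function is maximised over P_n(rho) at a "vertex",
   a distribution whose masses all lie in {c, rho c}.  Indeed, writing P_n(rho) locally as the box
   {a <= P_i <= rho a} (a = q_min) cut by [sum P = 1], mass can be moved between two coordinates
   strictly inside (a, rho a) in one of the two directions without decreasing the objective, until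
   one of them reaches the boundary; at most one interior coordinate then remains, and it is
   removed by interpolating between two vertices.  Against U_n a vertex with m upper masses has
   divergence g_f(m/n) (resp. g_{f*}(m/n)), so u_f and v_f are maxima of g over the grid {m/n}.
   Continuity of g gives the limit n -> oo (at rate K/n by the mean value theorem), the vertex with
   one upper mass controls the limit rho -> oo, and second-order Taylor bounds at 1 compare
   D_f(Q||U_n) with the chi^2-divergence n ||Q||^2 - 1, whose grid maximum is (rho-1)^2/(4 rho). *)

(** * Finite sums *)

Lemma rsum_ext n F G : (forall i, (1 <= i <= n)%nat -> F i = G i) -> rsum n F = rsum n G.
Proof.
  induction n as [|n IH]; intros H; simpl; auto.
  rewrite IH by (intros; apply H; lia). rewrite H by lia. reflexivity.
Qed.

Lemma rsum_plus n F G : rsum n (fun i => F i + G i) = rsum n F + rsum n G.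
Proof. induction n as [|n IH]; simpl; [lra | rewrite IH; lra]. Qed.

Lemma rsum_scal n c F : rsum n (fun i => c * F i) = c * rsum n F.
Proof. induction n as [|n IH]; simpl; [lra | rewrite IH; lra]. Qed.

Lemma rsum_const n c : rsum n (fun _ => c) = INR n * c.
Proof. induction n as [|n IH]; cbn [rsum]; [simpl; lra | rewrite IH, S_INR; lra]. Qed.

Lemma rsum_le n F G : (forall i, (1 <= i <= n)%nat -> F i <= G i) -> rsum n F <= rsum n G.
Proof.
  induction n as [|n IH]; intros H; simpl; [lra|].
  assert (rsum n F <= rsum n G) by (apply IH; intros; apply H; lia).
  assert (F (S n) <= G (S n)) by (apply H; lia). lra.
Qed.

Lemma rsum_nonneg n F : (forall i, (1 <= i <= n)%nat -> 0 <= F i) -> 0 <= rsum n F.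
Proof.
  intros H. replace 0 with (rsum n (fun _ => 0)) by (rewrite rsum_const; lra).
  apply rsum_le; auto.
Qed.

Lemma rsum_differ_at n F G j : (1 <= j <= n)%nat ->
  (forall i, (1 <= i <= n)%nat -> i <> j -> F i = G i) -> rsum n F = rsum n G + F j - G j.
Proof.
  induction n as [|n IH]; intros Hj H; simpl; [lia|].
  destruct (Nat.eq_dec j (S n)) as [->|Hne].
  - rewrite (rsum_ext n F G); [lra|]. intros; apply H; lia.
  - rewrite IH by (lia || (intros; apply H; lia)). rewrite (H (S n)) by lia. lra.
Qed.

Lemma rsum_cv n (F : nat -> nat -> R) (L : nat -> R) :
  (forall i, (1 <= i <= n)%nat -> Un_cv (fun k => F k i) (L i)) ->
  Un_cv (fun k => rsum n (F k)) (rsum n L).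
Proof.
  induction n as [|n IH]; simpl; intros H.
  - intros e He; exists O; intros; rewrite R_dist_eq; auto.
  - apply CV_plus; [apply IH; intros|]; apply H; lia.
Qed.

Lemma pmf_entry_le_1 n Q : (forall i, (1 <= i <= n)%nat -> 0 <= Q i) -> rsum n Q = 1 ->
  forall i, (1 <= i <= n)%nat -> Q i <= 1.
Proof.
  intros Hp Hs i Hi. rewrite <- Hs.
  rewrite (rsum_differ_at n Q (fun k => if (k =? i)%nat then 0 else Q k) i Hi).
  - rewrite Nat.eqb_refl.
    assert (0 <= rsum n (fun k => if (k =? i)%nat then 0 else Q k)); [|lra].
    apply rsum_nonneg. intros k Hk. destruct (k =? i)%nat; auto; lra.
  - intros k _ Hk. destruct (Nat.eqb_spec k i); [lia | reflexivity].
Qed.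

Fixpoint count_true (n : nat) (T : nat -> bool) : nat :=
  match n with O => O | S k => (count_true k T + if T (S k) then 1 else 0)%nat end.

Lemma count_true_le n T : (count_true n T <= n)%nat.
Proof. induction n; simpl; auto. destruct (T (S n)); lia. Qed.

Lemma count_true_mono n T T' : (forall i, (1 <= i <= n)%nat -> T' i = true -> T i = true) ->
  (count_true n T' <= count_true n T)%nat.
Proof.
  induction n as [|n IH]; intros H; simpl; [lia|].
  specialize (IH ltac:(intros; apply H; auto; lia)).
  specialize (H (S n) ltac:(lia)).
  destruct (T' (S n)), (T (S n)); try lia; discriminate (H eq_refl).
Qed.

Lemma count_true_lt n T T' : (forall i, (1 <= i <= n)%nat -> T' i = true -> T i = true) ->
  (exists i, (1 <= i <= n)%nat /\ T i = true /\ T' i = false) ->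
  (count_true n T' < count_true n T)%nat.
Proof.
  induction n as [|n IH]; intros H [i [Hi [Ti T'i]]]; [lia|]. simpl.
  destruct (Nat.eq_dec i (S n)) as [->|Hne].
  - rewrite Ti, T'i. assert (count_true n T' <= count_true n T)%nat; [|lia].
    apply count_true_mono. intros; apply H; auto; lia.
  - assert (count_true n T' < count_true n T)%nat.
    { apply IH; [intros; apply H; auto; lia | exists i; repeat split; auto; lia]. }
    specialize (H (S n) ltac:(lia)).
    destruct (T' (S n)), (T (S n)); try lia; discriminate (H eq_refl).
Qed.

Lemma count_true_le_m n m : count_true n (fun i => (i <=? m)%nat) = Nat.min n m.
Proof. induction n as [|n IH]; cbn [count_true]; auto. rewrite IH. destruct (Nat.leb_spec (S n) m); lia. Qed.

Lemma rsum_if n (T : nat -> bool) (x y : R) :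
  rsum n (fun i => if T i then x else y) = INR (count_true n T) * x + INR (n - count_true n T) * y.
Proof.
  induction n as [|n IH]; cbn [rsum count_true]; [simpl; lra|]. rewrite IH.
  assert (H := count_true_le n T). destruct (T (S n)); rewrite ?Nat.add_0_r.
  - replace (S n - (count_true n T + 1))%nat with (n - count_true n T)%nat by lia.
    rewrite plus_INR. simpl; lra.
  - replace (S n - count_true n T)%nat with (S (n - count_true n T)) by lia. rewrite S_INR. lra.
Qed.

(** * The set P_n(rho) *)

Lemma qmax_spec n F : (1 <= n)%nat ->
  (forall i, (1 <= i <= n)%nat -> F i <= qmax n F) /\ exists i, (1 <= i <= n)%nat /\ qmax n F = F i.
Proof.
  induction n as [|n IH]; intros Hn; [lia|]. destruct n.
  - split; [intros i Hi; replace i with 1%nat by lia; simpl; lra | exists 1%nat; split; [lia|auto]].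
  - destruct IH as [Hub [i [Hi Hq]]]; [lia|].
    change (qmax (S (S n)) F) with (Rmax (qmax (S n) F) (F (S (S n)))). split.
    + intros j Hj. destruct (Nat.eq_dec j (S (S n))) as [->|]; [apply Rmax_r|].
      eapply Rle_trans; [apply Hub; lia | apply Rmax_l].
    + unfold Rmax; destruct (Rle_dec _ _); [exists (S (S n)) | exists i]; split; auto; lia.
Qed.

Lemma qmin_spec n F : (1 <= n)%nat ->
  (forall i, (1 <= i <= n)%nat -> qmin n F <= F i) /\ exists i, (1 <= i <= n)%nat /\ qmin n F = F i.
Proof.
  induction n as [|n IH]; intros Hn; [lia|]. destruct n.
  - split; [intros i Hi; replace i with 1%nat by lia; simpl; lra | exists 1%nat; split; [lia|auto]].
  - destruct IH as [Hlb [i [Hi Hq]]]; [lia|].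
    change (qmin (S (S n)) F) with (Rmin (qmin (S n) F) (F (S (S n)))). split.
    + intros j Hj. destruct (Nat.eq_dec j (S (S n))) as [->|]; [apply Rmin_r|].
      eapply Rle_trans; [apply Rmin_l | apply Hlb; lia].
    + unfold Rmin; destruct (Rle_dec _ _); [exists i | exists (S (S n))]; split; auto; lia.
Qed.

Definition Pnr_pairwise (n : nat) (rho : R) (Q : nat -> R) : Prop :=
  (forall i, (1 <= i <= n)%nat -> 0 < Q i) /\ rsum n Q = 1 /\
  (forall i j, (1 <= i <= n)%nat -> (1 <= j <= n)%nat -> Q i <= rho * Q j).

Lemma Pnr_iff n rho Q : (1 <= n)%nat -> Pnr n rho Q <-> Pnr_pairwise n rho Q.
Proof.
  intros Hn.
  destruct (qmax_spec n Q Hn) as [Hmax [i0 [Hi0 Emax]]].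
  destruct (qmin_spec n Q Hn) as [Hmin [j0 [Hj0 Emin]]]. split.
  - intros [[_ Hs] [Hp Hr]]. assert (0 < qmin n Q) by (rewrite Emin; auto).
    repeat split; auto. intros i j Hi Hj.
    apply Rmult_le_compat_r with (r := qmin n Q) in Hr; [|lra].
    unfold Rdiv in Hr; rewrite Rmult_assoc, Rinv_l, Rmult_1_r in Hr by lra.
    specialize (Hmax i Hi); specialize (Hmin j Hj). specialize (Hp i Hi). nra.
  - intros [Hp [Hs Hr]]. repeat split; auto; [intros; left; auto|].
    rewrite Emax, Emin. specialize (Hr i0 j0 Hi0 Hj0). specialize (Hp j0 Hj0).
    apply Rmult_le_reg_r with (Q j0); auto. unfold Rdiv; rewrite Rmult_assoc, Rinv_l; lra.
Qed.

Lemma Pnr_pairwise_ge n rho Q : Pnr_pairwise n rho Q -> (1 <= n)%nat -> 1 <= rho ->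
  forall j, (1 <= j <= n)%nat -> / (INR n * rho) <= Q j.
Proof.
  intros [Hp [Hs Hr]] Hn Hrho j Hj.
  assert (H : rsum n Q <= rsum n (fun _ => rho * Q j)) by (apply rsum_le; intros; apply Hr; auto).
  rewrite rsum_const, Hs in H. assert (0 < INR n) by (apply lt_0_INR; lia).
  apply Rmult_le_reg_l with (INR n * rho); [nra|]. rewrite Rinv_r by nra. lra.
Qed.

Lemma Pnr_scaled_entry n rho Q : (1 <= n)%nat -> Pnr n rho Q ->
  forall i, (1 <= i <= n)%nat -> / rho <= INR n * Q i <= rho.
Proof.
  intros Hn HQ i Hi. apply Pnr_iff in HQ as [Hp [Hs Hr]]; auto.
  assert (A1 : rsum n (fun _ => Q i) <= rsum n (fun j => rho * Q j)) by (apply rsum_le; intros; apply Hr; auto).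
  assert (A2 : rsum n Q <= rsum n (fun _ => rho * Q i)) by (apply rsum_le; intros; apply Hr; auto).
  rewrite rsum_const in A1, A2. rewrite rsum_scal, Hs in A1. rewrite Hs in A2.
  assert (Hqi := Hp i Hi). assert (Hii := Hr i i Hi Hi). assert (0 < rho) by nra. split; [|lra].
  apply Rmult_le_reg_l with rho; [lra|]. rewrite Rinv_r by lra. lra.
Qed.

Lemma Pnr_convex n rho : (1 <= n)%nat -> convex_set (Pnr n rho).
Proof.
  intros Hn P Q t HP HQ Ht. apply Pnr_iff in HP as [Pp [Ps Pr]]; auto.
  apply Pnr_iff in HQ as [Qp [Qs Qr]]; auto. apply Pnr_iff; auto. repeat split.
  - intros i Hi. specialize (Pp i Hi); specialize (Qp i Hi).
    destruct (Req_dec t 0) as [->|]; [lra|]. nra.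
  - rewrite rsum_plus, !rsum_scal, Ps, Qs. ring.
  - intros i j Hi Hj. specialize (Pr i j Hi Hj); specialize (Qr i j Hi Hj).
    assert (t * P i <= t * (rho * P j)) by (apply Rmult_le_compat_l; lra).
    assert ((1 - t) * Q i <= (1 - t) * (rho * Q j)) by (apply Rmult_le_compat_l; lra). lra.
Qed.

(** * Reduction to vertices *)

Definition vertex_norm (n : nat) (rho : R) (T : nat -> bool) : R :=
  rsum n (fun i => if T i then rho else 1).
Definition vertex (n : nat) (rho : R) (T : nat -> bool) : nat -> R :=
  fun i => (if T i then rho else 1) / vertex_norm n rho T.

Lemma vertex_norm_count n rho T :
  vertex_norm n rho T = INR (count_true n T) * rho + (INR n - INR (count_true n T)).
Proof. unfold vertex_norm. rewrite rsum_if, minus_INR by apply count_true_le. ring. Qed.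

Lemma vertex_norm_ge n rho T : 1 <= rho -> INR n <= vertex_norm n rho T.
Proof.
  intros Hr. rewrite <- (Rmult_1_r (INR n)), <- rsum_const.
  apply rsum_le. intros i _; destruct (T i); lra.
Qed.

Lemma vertex_ext n rho T T' : (forall i, (1 <= i <= n)%nat -> T i = T' i) ->
  forall i, (1 <= i <= n)%nat -> vertex n rho T i = vertex n rho T' i.
Proof.
  intros H i Hi. unfold vertex, vertex_norm. rewrite H by auto. f_equal.
  apply rsum_ext. intros; rewrite H; auto.
Qed.

Lemma vertex_Pnr_pairwise n rho T : (1 <= n)%nat -> 1 <= rho -> Pnr_pairwise n rho (vertex n rho T).
Proof.
  intros Hn Hr. assert (HZ := vertex_norm_ge n rho T Hr).
  assert (1 <= INR n) by (apply (le_INR 1); lia).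
  assert (0 < / vertex_norm n rho T) by (apply Rinv_0_lt_compat; lra).
  unfold vertex, Rdiv. repeat split.
  - intros i _; destruct (T i); apply Rmult_lt_0_compat; lra.
  - rewrite (rsum_ext n _ (fun i => / vertex_norm n rho T * (if T i then rho else 1))) by (intros; ring).
    rewrite rsum_scal. fold (vertex_norm n rho T). field; lra.
  - intros i j _ _. set (z := / vertex_norm n rho T) in *.
    assert (0 <= (rho - 1) * z) by (apply Rmult_le_pos; lra).
    destruct (T i), (T j); nra.
Qed.

Lemma vertex_Pnr n rho T : (1 <= n)%nat -> 1 <= rho -> Pnr n rho (vertex n rho T).
Proof. intros Hn Hr. apply Pnr_iff, vertex_Pnr_pairwise; auto. Qed.

(** Both [Df f n . Q] and [Df f n Q .] are of this form. *)
Definition sep_sum (psi : nat -> R -> R) (n : nat) (Q : nat -> R) : R := rsum n (fun i => psi i (Q i)).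

Lemma sep_sum_ext psi n P Q : (forall i, (1 <= i <= n)%nat -> P i = Q i) -> sep_sum psi n P = sep_sum psi n Q.
Proof. intros H; apply rsum_ext; intros; rewrite H; auto. Qed.

Lemma sep_sum_convex_split psi n P Q R0 t :
  (forall i, (1 <= i <= n)%nat -> convex_pos (psi i)) ->
  (forall i, (1 <= i <= n)%nat -> 0 < P i /\ 0 < Q i) -> 0 <= t <= 1 ->
  (forall i, (1 <= i <= n)%nat -> R0 i = t * P i + (1 - t) * Q i) ->
  sep_sum psi n R0 <= sep_sum psi n P \/ sep_sum psi n R0 <= sep_sum psi n Q.
Proof.
  intros Hc Hp Ht HR.
  assert (H : sep_sum psi n R0 <= t * sep_sum psi n P + (1 - t) * sep_sum psi n Q).
  { unfold sep_sum. rewrite <- !rsum_scal, <- rsum_plus. apply rsum_le.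
    intros i Hi; rewrite HR by auto. destruct (Hp i Hi); apply Hc; auto. }
  destruct (Rle_dec (sep_sum psi n P) (sep_sum psi n Q)); [right|left]; nra.
Qed.

Section Smoothing.

Variable psi : nat -> R -> R.
Variables (n : nat) (rho a : R).
Hypothesis psi_convex : forall i, (1 <= i <= n)%nat -> convex_pos (psi i).
Hypothesis Hn : (1 <= n)%nat.
Hypothesis Hrho : 1 <= rho.
Hypothesis Ha : 0 < a.

Definition in_box (Q : nat -> R) : Prop :=
  (forall i, (1 <= i <= n)%nat -> a <= Q i <= rho * a) /\ rsum n Q = 1.

Definition interiorb (Q : nat -> R) (i : nat) : bool :=
  if Rlt_dec a (Q i) then if Rlt_dec (Q i) (rho * a) then true else false else false.

Lemma interiorb_true Q i : interiorb Q i = true <-> a < Q i < rho * a.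
Proof.
  unfold interiorb. destruct (Rlt_dec a (Q i)); [destruct (Rlt_dec (Q i) (rho * a))|];
    split; intros H; try discriminate; auto; lra.
Qed.

Definition shift (Q : nat -> R) (i j : nat) (t : R) : nat -> R :=
  fun k => if (k =? i)%nat then Q i + t else if (k =? j)%nat then Q j - t else Q k.

Lemma shift_sum Q i j t : (1 <= i <= n)%nat -> (1 <= j <= n)%nat -> i <> j ->
  rsum n (shift Q i j t) = rsum n Q.
Proof.
  intros Hi Hj Hij.
  rewrite (rsum_differ_at n _ (fun k => if (k =? j)%nat then Q j - t else Q k) i Hi).
  - rewrite (rsum_differ_at n _ Q j Hj).
    + unfold shift. rewrite !Nat.eqb_refl. destruct (Nat.eqb_spec i j); [lia | lra].
    + intros k _ Hk. destruct (Nat.eqb_spec k j); [lia | auto].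
  - intros k _ Hk. unfold shift. destruct (Nat.eqb_spec k i); [lia | auto].
Qed.

Lemma shift_in_box Q i j t : in_box Q -> (1 <= i <= n)%nat -> (1 <= j <= n)%nat -> i <> j ->
  a <= Q i + t <= rho * a -> a <= Q j - t <= rho * a -> in_box (shift Q i j t).
Proof.
  intros [HQ Hs] Hi Hj Hij Hti Htj. split; [|rewrite shift_sum; auto].
  intros k Hk. unfold shift. destruct (Nat.eqb_spec k i); [auto|]. destruct (Nat.eqb_spec k j); auto.
Qed.

Lemma shift_count_lt Q i j t : (1 <= i <= n)%nat -> (1 <= j <= n)%nat -> i <> j ->
  interiorb Q i = true -> interiorb Q j = true ->
  (Q i + t <= a \/ rho * a <= Q i + t \/ Q j - t <= a \/ rho * a <= Q j - t) ->
  (count_true n (interiorb (shift Q i j t)) < count_true n (interiorb Q))%nat.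
Proof.
  intros Hi Hj Hij Ii Ij Hhit. apply count_true_lt.
  - intros k Hk. unfold shift at 1.
    destruct (Nat.eqb_spec k i) as [->|]; [auto|]. destruct (Nat.eqb_spec k j) as [->|]; [auto|].
    unfold interiorb, shift. destruct (Nat.eqb_spec k i), (Nat.eqb_spec k j); tauto.
  - assert (Si : shift Q i j t i = Q i + t) by (unfold shift; now rewrite Nat.eqb_refl).
    assert (Sj : shift Q i j t j = Q j - t)
      by (unfold shift; rewrite Nat.eqb_refl; destruct (Nat.eqb_spec j i); [lia | auto]).
    destruct (interiorb (shift Q i j t) i) eqn:Ei; [destruct (interiorb (shift Q i j t) j) eqn:Ej|].
    + apply interiorb_true in Ei, Ej. lra.
    + exists j; auto.
    + exists i; auto.
Qed.

Lemma Rmin_eq_l_or_r x y : Rmin x y = x \/ Rmin x y = y.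
Proof. unfold Rmin; destruct (Rle_dec x y); auto. Qed.

(** Moving mass between two interior coordinates along the segment through [Q] until one of them
    hits the boundary of the box: by convexity one of the two endpoints does at least as well. *)
Lemma smooth_step Q i j : in_box Q -> (1 <= i <= n)%nat -> (1 <= j <= n)%nat -> i <> j ->
  interiorb Q i = true -> interiorb Q j = true ->
  exists Q', in_box Q' /\ sep_sum psi n Q <= sep_sum psi n Q' /\
    (count_true n (interiorb Q') < count_true n (interiorb Q))%nat.
Proof.
  intros HQ Hi Hj Hij Ii Ij.
  pose proof (proj1 (interiorb_true Q i) Ii). pose proof (proj1 (interiorb_true Q j) Ij).
  set (tp := Rmin (rho * a - Q i) (Q j - a)). set (tm := Rmin (Q i - a) (rho * a - Q j)).
  assert (tp <= rho * a - Q i /\ tp <= Q j - a) by (split; [apply Rmin_l | apply Rmin_r]).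
  assert (tm <= Q i - a /\ tm <= rho * a - Q j) by (split; [apply Rmin_l | apply Rmin_r]).
  assert (Htp : 0 < tp) by (apply Rmin_glb_lt; lra).
  assert (Htm : 0 < tm) by (apply Rmin_glb_lt; lra).
  set (A := shift Q i j (- tm)). set (B := shift Q i j tp).
  assert (HA : in_box A) by (apply shift_in_box; auto; lra).
  assert (HB : in_box B) by (apply shift_in_box; auto; lra).
  set (lam := tp / (tp + tm)).
  assert (Hlam : 0 <= lam <= 1).
  { unfold lam; split; [apply Rdiv_le_0_compat; lra|].
    apply Rmult_le_reg_r with (tp + tm); [lra|]. unfold Rdiv; rewrite Rmult_assoc, Rinv_l; lra. }
  assert (Hcomb : forall k, (1 <= k <= n)%nat -> Q k = lam * A k + (1 - lam) * B k).
  { assert (Hl : lam * tm = (1 - lam) * tp) by (unfold lam; field; lra).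
    intros k Hk. unfold A, B, shift.
    destruct (Nat.eqb_spec k i) as [->|]; [|destruct (Nat.eqb_spec k j) as [->|]]; lra. }
  assert (Hpos : forall k, (1 <= k <= n)%nat -> 0 < A k /\ 0 < B k).
  { intros k Hk. destruct (proj1 HA k Hk), (proj1 HB k Hk). lra. }
  destruct (sep_sum_convex_split psi n A B Q lam psi_convex Hpos Hlam Hcomb) as [HoA|HoB].
  - exists A. repeat split; try apply HA; auto. apply shift_count_lt; auto.
    assert (tm = Q i - a \/ tm = rho * a - Q j) by apply Rmin_eq_l_or_r. lra.
  - exists B. repeat split; try apply HB; auto. apply shift_count_lt; auto.
    assert (tp = rho * a - Q i \/ tp = Q j - a) by apply Rmin_eq_l_or_r. lra.
Qed.

Lemma smooth_to_one_interior Q : in_box Q ->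
  exists Q', in_box Q' /\ sep_sum psi n Q <= sep_sum psi n Q' /\
    forall i j, (1 <= i <= n)%nat -> (1 <= j <= n)%nat ->
      interiorb Q' i = true -> interiorb Q' j = true -> i = j.
Proof.
  remember (count_true n (interiorb Q)) as N eqn:HN. revert Q HN.
  induction N as [N IH] using lt_wf_ind. intros Q HN HQ.
  destruct (classic (exists i j, (1 <= i <= n)%nat /\ (1 <= j <= n)%nat /\
                       interiorb Q i = true /\ interiorb Q j = true /\ i <> j))
    as [[i [j [Hi [Hj [Ii [Ij Hij]]]]]]|Hno].
  - destruct (smooth_step Q i j HQ Hi Hj Hij Ii Ij) as [Q' [HQ' [Ho Hlt]]].
    destruct (IH (count_true n (interiorb Q')) ltac:(lia) Q' eq_refl HQ') as [Q'' [H1 [H2 H3]]].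
    exists Q''; split; [|split]; auto; lra.
  - exists Q; split; [|split]; auto; [lra|]. intros i j Hi Hj Ii Ij.
    apply NNPP; intro; apply Hno; exists i, j; auto.
Qed.

Definition high (Q : nat -> R) (i : nat) : bool := if Rlt_dec a (Q i) then true else false.

Lemma box_boundary_value Q i : in_box Q -> (1 <= i <= n)%nat -> interiorb Q i = false ->
  Q i = a * (if high Q i then rho else 1).
Proof.
  intros [HQ _] Hi Hb. specialize (HQ i Hi). unfold high.
  destruct (Rlt_dec a (Q i)); [|lra].
  destruct (Req_dec (Q i) (rho * a)); [lra|].
  assert (interiorb Q i = true) by (apply interiorb_true; lra). congruence.
Qed.

Lemma box_vertex_no_interior Q : in_box Q -> (forall i, (1 <= i <= n)%nat -> interiorb Q i = false) ->
  forall i, (1 <= i <= n)%nat -> Q i = vertex n rho (high Q) i.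
Proof.
  intros HQ Hb. assert (HZ := vertex_norm_ge n rho (high Q) Hrho).
  assert (1 <= INR n) by (apply (le_INR 1); lia).
  assert (E : 1 = a * vertex_norm n rho (high Q)).
  { destruct HQ as [HQ' Hs]. transitivity (rsum n Q); [auto|]. unfold vertex_norm. rewrite <- rsum_scal.
    apply rsum_ext. intros i Hi. apply box_boundary_value; auto. split; auto. }
  assert (Ea : a = / vertex_norm n rho (high Q)) by (rewrite <- (Rmult_1_l (/ _)), E; field; lra).
  intros i Hi. rewrite box_boundary_value by auto. unfold vertex, Rdiv. rewrite <- Ea. ring.
Qed.

Definition set_at (T : nat -> bool) (k : nat) (b : bool) : nat -> bool :=
  fun i => if (i =? k)%nat then b else T i.

(** With a single interior coordinate [j], [Q] lies on the segment between the vertices in which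
    [j] is pushed to the lower and to the upper level. *)
Lemma box_vertex_one_interior Q j : in_box Q -> (1 <= j <= n)%nat -> interiorb Q j = true ->
  (forall i, (1 <= i <= n)%nat -> i <> j -> interiorb Q i = false) ->
  exists t, 0 <= t <= 1 /\ forall i, (1 <= i <= n)%nat ->
    Q i = t * vertex n rho (set_at (high Q) j false) i + (1 - t) * vertex n rho (set_at (high Q) j true) i.
Proof.
  intros HQ Hj Ij Hb. set (T0 := set_at (high Q) j false). set (T1 := set_at (high Q) j true).
  assert (HQT : forall T b, T = set_at (high Q) j b -> forall i, (1 <= i <= n)%nat -> i <> j ->
                  Q i = a * (if T i then rho else 1)).
  { intros T b -> i Hi Hij. unfold set_at. destruct (Nat.eqb_spec i j); [lia|].
    apply box_boundary_value; auto. }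
  assert (Hsum : forall T b, T = set_at (high Q) j b ->
                   1 = a * vertex_norm n rho T + Q j - a * (if b then rho else 1)).
  { intros T b HT. destruct HQ as [HQ' Hs]. transitivity (rsum n Q); [auto|]. unfold vertex_norm. rewrite <- rsum_scal.
    rewrite (rsum_differ_at n Q _ j Hj) by (intros; apply (HQT T b HT); auto).
    rewrite HT; unfold set_at; rewrite Nat.eqb_refl. ring. }
  pose proof (Hsum T0 false eq_refl) as E0. pose proof (Hsum T1 true eq_refl) as E1.
  pose proof (proj1 (interiorb_true Q j) Ij) as Qj.
  assert (1 <= INR n) by (apply (le_INR 1); lia).
  assert (Z0 := vertex_norm_ge n rho T0 Hrho). assert (Z1 := vertex_norm_ge n rho T1 Hrho).
  set (b0 := / vertex_norm n rho T0). set (b1 := / vertex_norm n rho T1).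
  assert (Hb0 : a < b0).
  { unfold b0; apply Rmult_lt_reg_l with (vertex_norm n rho T0); [lra|]; rewrite Rinv_r; lra. }
  assert (Hb1 : b1 < a).
  { unfold b1; apply Rmult_lt_reg_l with (vertex_norm n rho T1); [lra|]; rewrite Rinv_r; lra. }
  set (t := (a - b1) / (b0 - b1)). exists t. split.
  { unfold t; split; [apply Rdiv_le_0_compat; lra|].
    apply Rmult_le_reg_r with (b0 - b1); [lra|]. unfold Rdiv; rewrite Rmult_assoc, Rinv_l; lra. }
  assert (Hta : t * b0 + (1 - t) * b1 = a) by (unfold t; field; lra).
  assert (Hoff : forall i, (1 <= i <= n)%nat -> i <> j ->
                   Q i = t * vertex n rho T0 i + (1 - t) * vertex n rho T1 i).
  { intros i Hi Hij. rewrite (HQT T0 false eq_refl) by auto. unfold vertex, Rdiv. fold b0 b1.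
    assert (ET : T1 i = T0 i) by (unfold T0, T1, set_at; destruct (Nat.eqb_spec i j); [lia | auto]).
    rewrite ET. destruct (T0 i); nra. }
  intros i Hi. destruct (Nat.eq_dec i j) as [->|]; auto.
  assert (Hs : rsum n (fun i => t * vertex n rho T0 i + (1 - t) * vertex n rho T1 i) = 1).
  { rewrite rsum_plus, !rsum_scal.
    rewrite (proj1 (proj2 (vertex_Pnr_pairwise n rho T0 Hn Hrho))).
    rewrite (proj1 (proj2 (vertex_Pnr_pairwise n rho T1 Hn Hrho))). ring. }
  destruct HQ as [_ HQs]. rewrite (rsum_differ_at n Q _ j Hj Hoff) in HQs. lra.
Qed.

Lemma box_vertex_dominates Q : in_box Q -> exists T, sep_sum psi n Q <= sep_sum psi n (vertex n rho T).
Proof.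
  intros HQ. destruct (smooth_to_one_interior Q HQ) as [Q' [HQ' [Hle Huniq]]].
  assert (Hpos : forall T T' i, (1 <= i <= n)%nat -> 0 < vertex n rho T i /\ 0 < vertex n rho T' i).
  { intros T T' i Hi. split; apply (vertex_Pnr_pairwise n rho _ Hn Hrho); auto. }
  destruct (classic (exists j, (1 <= j <= n)%nat /\ interiorb Q' j = true)) as [[j [Hj Ij]]|Hno].
  - destruct (box_vertex_one_interior Q' j HQ' Hj Ij) as [t [Ht Hcomb]].
    { intros i Hi Hij. destruct (interiorb Q' i) eqn:Ii; auto. exfalso; apply Hij, Huniq; auto. }
    destruct (sep_sum_convex_split psi n _ _ Q' t psi_convex (Hpos _ _) Ht Hcomb);
      [exists (set_at (high Q') j false) | exists (set_at (high Q') j true)]; lra.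
  - exists (high Q'). rewrite <- (sep_sum_ext psi n Q' (vertex n rho (high Q'))); [lra|].
    apply box_vertex_no_interior; auto. intros i Hi. destruct (interiorb Q' i) eqn:E; auto.
    exfalso; eauto.
Qed.

End Smoothing.

Lemma bool_pattern_max k (F : (nat -> bool) -> R) :
  (forall T T', (forall i, (1 <= i <= k)%nat -> T i = T' i) -> F T = F T') ->
  exists Ts, forall T, F T <= F Ts.
Proof.
  revert F. induction k as [|k IH]; intros F HF.
  - exists (fun _ => true). intros T. right. apply HF. intros; lia.
  - assert (Hset : forall b, exists Tb, forall T, F (set_at T (S k) b) <= F (set_at Tb (S k) b)).
    { intros b. apply (IH (fun T => F (set_at T (S k) b))). intros T T' H. apply HF.
      intros i Hi. unfold set_at. destruct (Nat.eqb_spec i (S k)); auto. apply H; lia. }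
    destruct (Hset false) as [T0 H0], (Hset true) as [T1 H1].
    assert (Hsplit : forall T, F T = F (set_at T (S k) (T (S k)))).
    { intros T. apply HF. intros i _; unfold set_at. destruct (Nat.eqb_spec i (S k)); subst; auto. }
    destruct (Rle_dec (F (set_at T0 (S k) false)) (F (set_at T1 (S k) true)));
      [exists (set_at T1 (S k) true) | exists (set_at T0 (S k) false)];
      intros T; rewrite Hsplit; specialize (H0 T); specialize (H1 T); destruct (T (S k)); lra.
Qed.

Lemma sep_sum_max_at_vertex psi n rho : (forall i, (1 <= i <= n)%nat -> convex_pos (psi i)) ->
  (1 <= n)%nat -> 1 <= rho ->
  exists Ts, forall Q, Pnr n rho Q -> sep_sum psi n Q <= sep_sum psi n (vertex n rho Ts).
Proof.
  intros Hc Hn Hr.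
  destruct (bool_pattern_max n (fun T => sep_sum psi n (vertex n rho T))) as [Ts HTs].
  { intros T T' H. apply sep_sum_ext. apply vertex_ext; auto. }
  exists Ts. intros Q HQ. apply Pnr_iff in HQ as [Hp [Hs Hrat]]; auto.
  destruct (qmin_spec n Q Hn) as [Hmin [j0 [Hj0 Hm]]].
  assert (Ha : 0 < qmin n Q) by (rewrite Hm; auto).
  destruct (box_vertex_dominates psi n rho (qmin n Q) Hc Hn Hr Ha Q) as [T HT].
  { split; auto. intros i Hi. split; auto. rewrite Hm; auto. }
  eapply Rle_trans; [apply HT | apply HTs].
Qed.

Lemma maxval_of_is_max {T : Type} (S : T -> Prop) (F : T -> R) m : is_max S F m -> maxval S F = m.
Proof.
  intros H. assert (H' : is_max S F (maxval S F)) by (unfold maxval; apply epsilon_spec; eauto).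
  destruct H as [[x [Sx Fx]] Hx], H' as [[y [Sy Fy]] Hy].
  specialize (Hx y Sy). specialize (Hy x Sx). lra.
Qed.

Lemma is_max_ext {T : Type} (S : T -> Prop) (F G : T -> R) m :
  (forall x, S x -> F x = G x) -> is_max S F m -> is_max S G m.
Proof.
  intros H [[x [Sx Fx]] Hx]. split; [exists x; split; auto; rewrite <- H; auto|].
  intros y Sy; rewrite <- H; auto.
Qed.

Lemma convex_pos_scale f c : convex_pos f -> 0 < c -> convex_pos (fun p => c * f (p / c)).
Proof.
  intros Hf Hc x y t Hx Hy Ht.
  replace ((t * x + (1 - t) * y) / c) with (t * (x / c) + (1 - t) * (y / c)) by (field; lra).
  assert (H := Hf (x / c) (y / c) t ltac:(apply Rdiv_lt_0_compat; lra) ltac:(apply Rdiv_lt_0_compat; lra) Ht).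
  apply Rmult_le_compat_l with (r := c) in H; lra.
Qed.

Lemma convex_pos_perspective f c : convex_pos f -> 0 < c -> convex_pos (fun p => p * f (c / p)).
Proof.
  intros Hf Hc x y t Hx Hy Ht.
  set (p := t * x + (1 - t) * y). assert (Hp : 0 < p) by (unfold p; nra).
  set (mu := t * x / p).
  assert (Hmu : 0 <= mu <= 1).
  { unfold mu; split; [apply Rdiv_le_0_compat; nra|].
    apply Rmult_le_reg_r with p; [lra|]. unfold Rdiv; rewrite Rmult_assoc, Rinv_l by lra; unfold p; nra. }
  assert (E : c / p = mu * (c / x) + (1 - mu) * (c / y)) by (unfold mu, p in *; field; lra).
  assert (H := Hf (c / x) (c / y) mu ltac:(apply Rdiv_lt_0_compat; lra) ltac:(apply Rdiv_lt_0_compat; lra) Hmu).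
  rewrite <- E in H. apply Rmult_le_compat_l with (r := p) in H; [|lra].
  replace (p * (mu * f (c / x) + (1 - mu) * f (c / y)))
    with (t * (x * f (c / x)) + (1 - t) * (y * f (c / y))) in H by (unfold mu, p in *; field; lra).
  auto.
Qed.

Lemma Df_left_convex f n Q : convex_pos f -> full_support n Q ->
  forall i, (1 <= i <= n)%nat -> convex_pos (fun p => Q i * f (p / Q i)).
Proof. intros Hf HQ i Hi. apply convex_pos_scale; auto. Qed.

Lemma Df_right_convex f n Q : convex_pos f -> full_support n Q ->
  forall i, (1 <= i <= n)%nat -> convex_pos (fun p => p * f (Q i / p)).
Proof. intros Hf HQ i Hi. apply convex_pos_perspective; auto. Qed.

Lemma Un_full_support n : (1 <= n)%nat -> full_support n (Un n).
Proof. intros Hn i _. unfold Un. apply Rinv_0_lt_compat, lt_0_INR; lia. Qed.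

Lemma vertex_norm_scaled n rho T : (1 <= n)%nat ->
  vertex_norm n rho T = INR n * (1 + (rho - 1) * (INR (count_true n T) / INR n)).
Proof.
  intros Hn. assert (1 <= INR n) by (apply (le_INR 1); lia).
  rewrite vertex_norm_count. field; lra.
Qed.

Lemma Df_vertex_U f n rho T : (1 <= n)%nat -> 1 <= rho ->
  Df f n (vertex n rho T) (Un n) = gf f rho (INR (count_true n T) / INR n).
Proof.
  intros Hn Hr. assert (1 <= INR n) by (apply (le_INR 1); lia).
  unfold Df, Un, vertex. rewrite (vertex_norm_scaled n rho T Hn).
  set (x := INR (count_true n T) / INR n).
  assert (0 <= x) by (apply Rdiv_le_0_compat; [apply pos_INR | lra]).
  set (D := 1 + (rho - 1) * x). assert (0 < D) by (unfold D; nra).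
  assert (Hterm : forall c, / INR n * f (c / (INR n * D) / / INR n) = / INR n * f (c / D))
    by (intros c; do 2 f_equal; field; lra).
  rewrite (rsum_ext n _ (fun i => if T i then / INR n * f (rho / D) else / INR n * f (1 / D)))
    by (intros i _; destruct (T i); apply Hterm).
  rewrite rsum_if, minus_INR by apply count_true_le. unfold gf. fold D.
  unfold x; field; lra.
Qed.

Lemma Df_U_vertex f n rho T : (1 <= n)%nat -> 1 <= rho ->
  Df f n (Un n) (vertex n rho T) = gf (fstar f) rho (INR (count_true n T) / INR n).
Proof.
  intros Hn Hr. assert (1 <= INR n) by (apply (le_INR 1); lia).
  unfold Df, Un, vertex. rewrite (vertex_norm_scaled n rho T Hn).
  set (x := INR (count_true n T) / INR n).
  assert (0 <= x) by (apply Rdiv_le_0_compat; [apply pos_INR | lra]).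
  set (D := 1 + (rho - 1) * x). assert (0 < D) by (unfold D; nra).
  assert (Hterm : forall c, 0 < c ->
            c / (INR n * D) * f (/ INR n / (c / (INR n * D))) = / INR n * fstar f (c / D)).
  { intros c Hc. unfold fstar. replace (/ INR n / (c / (INR n * D))) with (1 / (c / D)) by (field; lra).
    field; lra. }
  rewrite (rsum_ext n _ (fun i => if T i then / INR n * fstar f (rho / D) else / INR n * fstar f (1 / D)))
    by (intros i _; destruct (T i); apply Hterm; lra).
  rewrite rsum_if, minus_INR by apply count_true_le. unfold gf. fold D.
  unfold x; field; lra.
Qed.

Lemma sep_sum_max_grid psi n rho (g : R -> R) :
  (forall i, (1 <= i <= n)%nat -> convex_pos (psi i)) -> (1 <= n)%nat -> 1 <= rho ->
  (forall T, sep_sum psi n (vertex n rho T) = g (INR (count_true n T) / INR n)) ->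
  exists M, is_max (Pnr n rho) (sep_sum psi n) M /\
            is_max (fun m => (m <= n)%nat) (fun m => g (INR m / INR n)) M.
Proof.
  intros Hc Hn Hr Hg. destruct (sep_sum_max_at_vertex psi n rho Hc Hn Hr) as [Ts Hmax].
  exists (sep_sum psi n (vertex n rho Ts)). split; split.
  - exists (vertex n rho Ts); split; auto. apply vertex_Pnr; auto.
  - exact Hmax.
  - exists (count_true n Ts). split; [apply count_true_le | rewrite Hg; auto].
  - intros m Hm. replace (INR m) with (INR (count_true n (fun i => (i <=? m)%nat)))
      by (rewrite count_true_le_m; f_equal; lia).
    rewrite <- Hg. apply Hmax, vertex_Pnr; auto.
Qed.

Lemma uf_is_max f n rho : convex_pos f -> (1 <= n)%nat -> 1 <= rho ->
  is_max (Pnr n rho) (fun Q => Df f n Q (Un n)) (uf f n rho) /\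
  is_max (fun m => (m <= n)%nat) (fun m => gf f rho (INR m / INR n)) (uf f n rho).
Proof.
  intros Hf Hn Hr.
  destruct (sep_sum_max_grid (fun i p => Un n i * f (p / Un n i)) n rho (gf f rho)) as [M [H1 H2]];
    [apply Df_left_convex, Un_full_support | | | intros; apply Df_vertex_U | ]; auto.
  replace (uf f n rho) with M; [auto|]. symmetry; apply maxval_of_is_max; exact H1.
Qed.

Lemma vf_is_max f n rho : convex_pos f -> (1 <= n)%nat -> 1 <= rho ->
  is_max (Pnr n rho) (fun Q => Df f n (Un n) Q) (vf f n rho) /\
  is_max (fun m => (m <= n)%nat) (fun m => gf (fstar f) rho (INR m / INR n)) (vf f n rho).
Proof.
  intros Hf Hn Hr.
  destruct (sep_sum_max_grid (fun i p => p * f (Un n i / p)) n rho (gf (fstar f) rho)) as [M [H1 H2]];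
    [apply Df_right_convex, Un_full_support | | | intros; apply Df_U_vertex | ]; auto.
  replace (vf f n rho) with M; [auto|]. symmetry; apply maxval_of_is_max; exact H1.
Qed.

Lemma Df_left_max_attained f n rho Q : convex_pos f -> (1 <= n)%nat -> 1 <= rho -> full_support n Q ->
  exists P, Pnr n rho P /\ forall P', Pnr n rho P' -> Df f n P' Q <= Df f n P Q.
Proof.
  intros Hf Hn Hr HQ.
  destruct (sep_sum_max_at_vertex (fun i p => Q i * f (p / Q i)) n rho) as [Ts HTs];
    [apply Df_left_convex | | | ]; auto.
  exists (vertex n rho Ts). split; [apply vertex_Pnr|]; auto.
Qed.

Lemma Df_right_max_attained f n rho Q : convex_pos f -> (1 <= n)%nat -> 1 <= rho -> full_support n Q ->
  exists P, Pnr n rho P /\ forall P', Pnr n rho P' -> Df f n Q P' <= Df f n Q P.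
Proof.
  intros Hf Hn Hr HQ.
  destruct (sep_sum_max_at_vertex (fun i p => p * f (Q i / p)) n rho) as [Ts HTs];
    [apply Df_right_convex | | | ]; auto.
  exists (vertex n rho Ts). split; [apply vertex_Pnr|]; auto.
Qed.

(** * The parametrisation Q_beta *)

Lemma Int_part_INR m : Int_part (INR m) = Z.of_nat m.
Proof.
  unfold Int_part. rewrite <- (up_tech (INR m) (Z.of_nat m)); [ring | |];
    rewrite ?plus_IZR, <- INR_IZR_INZ; simpl; lra.
Qed.

(** [beta_m] is the smallest mass of the vertex with [m] masses at the upper level. *)
Definition beta_m (n : nat) (rho : R) (m : nat) : R := / (INR m * rho + (INR n - INR m)).

Lemma i_beta_m n rho m : 1 < rho -> (1 <= n)%nat -> (m <= n)%nat -> i_beta n rho (beta_m n rho m) = m.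
Proof.
  intros Hr Hn Hm. unfold i_beta, beta_m. assert (INR m <= INR n) by (apply le_INR; auto).
  assert (0 <= INR m) by apply pos_INR. assert (1 <= INR n) by (apply (le_INR 1); lia).
  assert (0 < INR m * rho + (INR n - INR m)) by nra.
  replace ((1 - INR n * / (INR m * rho + (INR n - INR m))) / ((rho - 1) * / (INR m * rho + (INR n - INR m))))
    with (INR m) by (field; lra).
  rewrite Int_part_INR. apply Nat2Z.id.
Qed.

Lemma Qbeta_m n rho m : 1 < rho -> (1 <= n)%nat -> (m <= n)%nat ->
  forall j, (1 <= j <= n)%nat -> Qbeta n rho (beta_m n rho m) j = vertex n rho (fun i => (i <=? m)%nat) j.
Proof.
  intros Hr Hn Hm j Hj. unfold Qbeta. rewrite i_beta_m by auto. unfold vertex, beta_m.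
  rewrite vertex_norm_count, count_true_le_m. replace (Nat.min n m) with m by lia.
  assert (INR m <= INR n) by (apply le_INR; auto).
  assert (0 <= INR m) by apply pos_INR. assert (1 <= INR n) by (apply (le_INR 1); lia).
  assert (0 < INR m * rho + (INR n - INR m)) by nra.
  destruct (j <=? m)%nat; [|destruct (j =? S m)%nat]; field; lra.
Qed.

Lemma Qbeta_Pnr_pairwise n rho b : 1 < rho -> (1 <= n)%nat -> Gamma_n n rho b ->
  Pnr_pairwise n rho (Qbeta n rho b).
Proof.
  intros Hr Hn [Hb1 Hb2]. assert (1 <= INR n) by (apply (le_INR 1); lia).
  assert (Hd : 0 < 1 + (INR n - 1) * rho) by nra.
  assert (Hb : 0 < b) by (eapply Rlt_le_trans; [apply Rinv_0_lt_compat; exact Hd | auto]).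
  set (X := (1 - INR n * b) / ((rho - 1) * b)).
  assert (HX : X * ((rho - 1) * b) = 1 - INR n * b) by (unfold X; field; nra).
  assert (HX0 : 0 <= X).
  { apply Rmult_le_reg_r with ((rho - 1) * b); [nra|]. rewrite HX.
    apply Rmult_le_compat_r with (r := INR n) in Hb2; [|lra]. rewrite Rinv_l in Hb2; lra. }
  assert (HX1 : X <= INR n - 1).
  { apply Rmult_le_reg_r with ((rho - 1) * b); [nra|]. rewrite HX.
    apply Rmult_le_compat_r with (r := 1 + (INR n - 1) * rho) in Hb1; [|lra]. rewrite Rinv_l in Hb1; lra. }
  destruct (base_Int_part X) as [Hz1 Hz2].
  assert (Hz0 : (0 <= Int_part X)%Z) by (assert (-1 < Int_part X)%Z by (apply lt_IZR; simpl; lra); lia).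
  set (i := i_beta n rho b).
  assert (Hi : INR i = IZR (Int_part X)) by (unfold i, i_beta; fold X; rewrite INR_IZR_INZ, Z2Nat.id; auto).
  assert (Hin : (i <= n - 1)%nat).
  { apply INR_le. rewrite minus_INR by lia. simpl. lra. }
  set (c := 1 - (INR n + INR i * (rho - 1) - 1) * b).
  assert (0 <= (rho - 1) * b * (X - INR i)) by (apply Rmult_le_pos; nra).
  assert (0 <= (rho - 1) * b * (1 - (X - INR i))) by (apply Rmult_le_pos; nra).
  assert (Hval : forall j, b <= Qbeta n rho b j <= rho * b).
  { intros j. unfold Qbeta. fold i c. destruct (j <=? i)%nat; [|destruct (j =? S i)%nat]; unfold c; nra. }
  repeat split.
  - intros j _. specialize (Hval j); lra.
  - rewrite (rsum_differ_at n _ (fun j => if (j <=? i)%nat then rho * b else b) (S i)); [| lia |].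
    + rewrite rsum_if, count_true_le_m. replace (Nat.min n i) with i by lia.
      unfold Qbeta; fold i c. rewrite Nat.eqb_refl.
      replace (S i <=? i)%nat with false by (symmetry; apply Nat.leb_gt; lia).
      rewrite minus_INR by lia. unfold c. ring.
    + intros j _ Hj. unfold Qbeta; fold i. destruct (j <=? i)%nat; auto.
      destruct (Nat.eqb_spec j (S i)); [lia | auto].
  - intros j k _ _. pose proof (Hval j). pose proof (Hval k). nra.
Qed.

Lemma Qbeta_Pnr n rho b : 1 < rho -> (1 <= n)%nat -> Gamma_n n rho b -> Pnr n rho (Qbeta n rho b).
Proof. intros Hr Hn Hb. apply Pnr_iff, Qbeta_Pnr_pairwise; auto. Qed.

(** [beta_m n rho n] lies outside [Gamma_n], so the grid maximum must not be attained only at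
    [m = n]; the symmetry [g 1 = g 0] lets [m = 0] take its place. *)
Lemma Qbeta_is_max psi n rho (g : R -> R) M : 1 < rho -> (1 <= n)%nat ->
  (forall T, sep_sum psi n (vertex n rho T) = g (INR (count_true n T) / INR n)) -> g 1 = g 0 ->
  is_max (Pnr n rho) (sep_sum psi n) M -> is_max (fun m => (m <= n)%nat) (fun m => g (INR m / INR n)) M ->
  is_max (Gamma_n n rho) (fun b => sep_sum psi n (Qbeta n rho b)) M.
Proof.
  intros Hr Hn Hg Hg10 [_ HM] [[ms [Hms Hv]] _].
  assert (1 <= INR n) by (apply (le_INR 1); lia).
  assert (Hvert : forall m, (m <= n)%nat -> sep_sum psi n (Qbeta n rho (beta_m n rho m)) = g (INR m / INR n)).
  { intros m Hm. rewrite (sep_sum_ext psi n _ (vertex n rho (fun i => (i <=? m)%nat)))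
      by (apply Qbeta_m; auto; lra).
    rewrite Hg, count_true_le_m. repeat f_equal; lia. }
  assert (Hgamma : forall m, (m <= n - 1)%nat -> Gamma_n n rho (beta_m n rho m)).
  { intros m Hm. unfold beta_m.
    assert (INR m <= INR n - 1)
      by (replace (INR n - 1) with (INR (n - 1)) by (rewrite minus_INR by lia; reflexivity);
          apply le_INR; lia).
    assert (0 <= INR m) by apply pos_INR. split; apply Rinv_le_contravar; nra. }
  split.
  - destruct (Nat.eq_dec ms n) as [->|Hne].
    + exists (beta_m n rho 0). split; [apply Hgamma; lia|].
      rewrite Hvert, <- Hv by lia. simpl. unfold Rdiv. rewrite Rmult_0_l, Rinv_r by lra. auto.
    + exists (beta_m n rho ms). split; [apply Hgamma; lia|]. rewrite Hvert by lia. auto.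
  - intros b Hb. apply HM, Qbeta_Pnr; auto.
Qed.

Lemma gf_1_eq_gf_0 phi rho : 1 <= rho -> gf phi rho 1 = gf phi rho 0.
Proof.
  intros Hr. unfold gf. replace (rho / (1 + (rho - 1) * 1)) with 1 by (field; lra).
  replace (1 / (1 + (rho - 1) * 0)) with 1 by field. ring.
Qed.

(** * Continuity and the limit n -> oo *)

(** Convexity on both sides of [x] squeezes [f y - f x] linearly in [|y - x|]. *)
Lemma convex_pos_local_bound f x z w s y : convex_pos f -> 0 < x -> 0 < z -> w = 2 * x - z -> 0 < w ->
  0 <= s <= 1 -> y = s * z + (1 - s) * x -> Rabs (f y - f x) <= s * (Rabs (f z - f x) + Rabs (f w - f x)).
Proof.
  intros Hf Hx Hz Hw Hw0 Hs Hy.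
  assert (Hy0 : 0 < y) by (subst y; nra).
  assert (H1 := Hf z x s Hz Hx Hs). rewrite <- Hy in H1.
  assert (Ht : 0 <= / (1 + s) <= 1)
    by (split; [left; apply Rinv_0_lt_compat; lra | rewrite <- Rinv_1; apply Rinv_le_contravar; lra]).
  assert (H2 := Hf y w (/ (1 + s)) Hy0 Hw0 Ht).
  replace (/ (1 + s) * y + (1 - / (1 + s)) * w) with x in H2 by (subst; field; lra).
  apply Rmult_le_compat_l with (r := 1 + s) in H2; [|lra].
  replace ((1 + s) * (/ (1 + s) * f y + (1 - / (1 + s)) * f w)) with (f y + s * f w) in H2 by (field; lra).
  pose proof (Rle_abs (f z - f x)). pose proof (Rle_abs (- (f z - f x))).
  pose proof (Rle_abs (f w - f x)). pose proof (Rle_abs (- (f w - f x))).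
  rewrite Rabs_Ropp in *. apply Rabs_le. split; nra.
Qed.

Lemma convex_pos_continuity_pt f x : convex_pos f -> 0 < x -> continuity_pt f x.
Proof.
  intros Hf Hx. set (h := x / 2).
  set (C := Rabs (f (x + h) - f x) + Rabs (f (x - h) - f x)).
  assert (HC : 0 <= C) by (unfold C; pose proof (Rabs_pos (f (x + h) - f x)); pose proof (Rabs_pos (f (x - h) - f x)); lra).
  assert (Hh : 0 < h) by (unfold h; lra).
  intros eps Heps. exists (Rmin h (eps * h / (C + 1))). split.
  { apply Rmin_glb_lt; auto. apply Rdiv_lt_0_compat; nra. }
  intros y [_ Hd]. simpl in *. unfold R_dist in *.
  assert (Hd1 : Rabs (y - x) < h) by (eapply Rlt_le_trans; [apply Hd | apply Rmin_l]).
  assert (Hd2 : Rabs (y - x) < eps * h / (C + 1)) by (eapply Rlt_le_trans; [apply Hd | apply Rmin_r]).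
  set (s := Rabs (y - x) / h).
  assert (Hs : 0 <= s <= 1).
  { unfold s; split; [apply Rdiv_le_0_compat; [apply Rabs_pos | lra]|].
    apply Rmult_le_reg_r with h; [lra|]; unfold Rdiv; rewrite Rmult_assoc, Rinv_l; lra. }
  assert (Hb : Rabs (f y - f x) <= s * C).
  { destruct (Rle_dec x y).
    - apply (convex_pos_local_bound f x (x + h) (x - h) s y Hf Hx); try (unfold h; lra).
      unfold s. rewrite Rabs_right by lra. field; lra.
    - replace C with (Rabs (f (x - h) - f x) + Rabs (f (x + h) - f x)) by (unfold C; ring).
      apply (convex_pos_local_bound f x (x - h) (x + h) s y Hf Hx); try (unfold h; lra).
      unfold s. rewrite Rabs_left by lra. field; lra. }
  assert (s * (C + 1) < eps).
  { apply Rmult_lt_compat_r with (r := (C + 1) / h) in Hd2; [|apply Rdiv_lt_0_compat; lra].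
    replace (eps * h / (C + 1) * ((C + 1) / h)) with eps in Hd2 by (field; lra).
    unfold s. replace (Rabs (y - x) / h * (C + 1)) with (Rabs (y - x) * ((C + 1) / h)) by (field; lra).
    auto. }
  nra.
Qed.

Definition continuous_pos (phi : R -> R) : Prop := forall t, 0 < t -> continuity_pt phi t.

Lemma convex_pos_continuous_pos f : convex_pos f -> continuous_pos f.
Proof. intros Hf t Ht. apply convex_pos_continuity_pt; auto. Qed.

Lemma continuity_pt_at_ratio phi rho c x : continuous_pos phi -> 1 <= rho -> 0 < c -> 0 <= x ->
  continuity_pt (fun y => phi (c / (1 + (rho - 1) * y))) x.
Proof.
  intros Hp Hr Hc Hx. assert (0 < 1 + (rho - 1) * x) by nra.
  apply (continuity_pt_comp (fun y => c / (1 + (rho - 1) * y))); [|apply Hp, Rdiv_lt_0_compat; lra].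
  apply continuity_pt_div; [apply continuity_pt_const; intros ??; auto | | lra].
  apply derivable_continuous_pt. reg.
Qed.

Lemma gf_continuity_pt phi rho x : continuous_pos phi -> 1 <= rho -> 0 <= x <= 1 ->
  continuity_pt (gf phi rho) x.
Proof.
  intros Hp Hr Hx. unfold gf.
  assert (Hid : continuity_pt (fun y => y) x) by (apply derivable_continuous_pt; reg).
  apply continuity_pt_plus; apply continuity_pt_mult.
  - exact Hid.
  - apply continuity_pt_at_ratio; auto; lra.
  - apply continuity_pt_minus; [apply continuity_pt_const; intros ??; auto | exact Hid].
  - apply continuity_pt_at_ratio; auto; lra.
Qed.

Lemma fstar_continuous_pos f : continuous_pos f -> continuous_pos (fstar f).
Proof.
  intros Hf t Ht. unfold fstar. apply continuity_pt_mult; [apply derivable_continuous_pt; reg|].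
  apply (continuity_pt_comp (fun y => 1 / y)); [apply derivable_continuous_pt; reg; lra|].
  apply Hf, Rdiv_lt_0_compat; lra.
Qed.

Lemma gf_max_attained phi rho : continuous_pos phi -> 1 <= rho ->
  exists xs, 0 <= xs <= 1 /\ maxval unit_interval (gf phi rho) = gf phi rho xs /\
             is_max unit_interval (gf phi rho) (gf phi rho xs).
Proof.
  intros Hp Hr. destruct (continuity_ab_maj (gf phi rho) 0 1 ltac:(lra)) as [xs [H1 H2]].
  - intros; apply gf_continuity_pt; auto.
  - assert (Hmax : is_max unit_interval (gf phi rho) (gf phi rho xs)).
    { split; [exists xs; split; auto | intros y Hy; apply H1; auto]. }
    exists xs. split; [|split]; auto. apply maxval_of_is_max; auto.
Qed.

Lemma grid_below k x : (1 <= k)%nat -> 0 <= x <= 1 ->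
  exists m, (m <= k)%nat /\ INR m / INR k <= x /\ x - INR m / INR k < / INR k.
Proof.
  intros Hk Hx. assert (1 <= INR k) by (apply (le_INR 1); lia).
  destruct (base_Int_part (INR k * x)) as [Hz1 Hz2].
  assert (Hz0 : (0 <= Int_part (INR k * x))%Z)
    by (assert (-1 < Int_part (INR k * x))%Z by (apply lt_IZR; simpl; nra); lia).
  set (m := Z.to_nat (Int_part (INR k * x))).
  assert (Hm : INR m = IZR (Int_part (INR k * x))) by (unfold m; rewrite INR_IZR_INZ, Z2Nat.id; auto).
  exists m. split; [|split].
  - apply INR_le. nra.
  - apply Rmult_le_reg_l with (INR k); [lra|]. replace (INR k * (INR m / INR k)) with (INR m) by (field; lra). lra.
  - apply Rmult_lt_reg_l with (INR k); [lra|]. rewrite Rinv_r by lra.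
    replace (INR k * (x - INR m / INR k)) with (INR k * x - INR m) by (field; lra). lra.
Qed.

Lemma grid_in_unit_interval m k : (1 <= k)%nat -> (m <= k)%nat -> unit_interval (INR m / INR k).
Proof.
  intros Hk Hm. assert (1 <= INR k) by (apply (le_INR 1); lia). assert (INR m <= INR k) by (apply le_INR; auto).
  split; [apply Rdiv_le_0_compat; [apply pos_INR | lra]|].
  apply Rmult_le_reg_r with (INR k); [lra|]. unfold Rdiv; rewrite Rmult_assoc, Rinv_l; lra.
Qed.

Lemma grid_max_le phi rho n w M : (1 <= n)%nat -> is_max unit_interval (gf phi rho) M ->
  is_max (fun m => (m <= n)%nat) (fun m => gf phi rho (INR m / INR n)) w -> w <= M.
Proof.
  intros Hn [_ Hmax] [[m [Hm Hw]] _]. rewrite <- Hw. apply Hmax, grid_in_unit_interval; auto.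
Qed.

Lemma grid_max_cv phi rho xs (w : nat -> R) : continuous_pos phi -> 1 <= rho -> 0 <= xs <= 1 ->
  is_max unit_interval (gf phi rho) (gf phi rho xs) ->
  (forall k, (1 <= k)%nat -> is_max (fun m => (m <= k)%nat) (fun m => gf phi rho (INR m / INR k)) (w k)) ->
  Un_cv w (gf phi rho xs).
Proof.
  intros Hp Hr Hxs Hmax Hw eps Heps.
  destruct (gf_continuity_pt phi rho xs Hp Hr Hxs eps Heps) as [del [Hdel Hc]].
  destruct (INR_archimed del 1 Hdel) as [N HN].
  exists (S N). intros k Hk. assert (Hk1 : (1 <= k)%nat) by lia.
  assert (HkN : INR (S N) <= INR k) by (apply le_INR; lia). rewrite S_INR in HkN.
  assert (1 <= INR k) by (apply (le_INR 1); lia).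
  destruct (grid_below k xs Hk1 Hxs) as [m [Hm [Hm1 Hm2]]].
  assert (Hub := grid_max_le phi rho k (w k) _ Hk1 Hmax (Hw k Hk1)).
  assert (Hlow := proj2 (Hw k Hk1) m Hm). simpl in Hlow.
  assert (Hclose : Rabs (gf phi rho (INR m / INR k) - gf phi rho xs) < eps).
  { destruct (Req_dec (INR m / INR k) xs) as [->|Hne]; [rewrite Rminus_diag, Rabs_R0; auto|].
    apply Hc. split; [split; [exact I | auto]|]. simpl. unfold R_dist.
    rewrite Rabs_left1 by lra.
    assert (/ INR k < del) by (apply Rmult_lt_reg_l with (INR k); [lra|]; rewrite Rinv_r by lra; nra).
    lra. }
  unfold R_dist. apply Rabs_lt_between in Hclose. apply Rabs_lt_between. lra.
Qed.

Lemma gf_fstar_hv f rho x : 1 <= rho -> 0 <= x <= 1 -> gf (fstar f) rho x = hv f rho x.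
Proof.
  intros Hr Hx. unfold gf, hv, fstar. set (D := 1 + (rho - 1) * x). assert (0 < D) by (unfold D; nra).
  replace (1 / (rho / D)) with (D / rho) by (field; lra).
  replace (1 / (1 / D)) with D by (field; lra). field; lra.
Qed.

Lemma MVT_le_bound g K a b : a <= b ->
  (forall x, a < x < b -> exists d, derivable_pt_lim g x d /\ d <= K) ->
  (forall x, a <= x <= b -> continuity_pt g x) -> g b - g a <= K * (b - a).
Proof.
  intros Hab Hd Hc.
  set (dg := fun x => Rmin K (epsilon (inhabits 0) (fun d => derivable_pt_lim g x d /\ d <= K))).
  destruct (MVT_gen g a b dg) as [c [Hc1 Hc2]].
  - rewrite Rmin_left, Rmax_right by auto. intros x Hx. apply is_derive_Reals.
    destruct (epsilon_spec (inhabits 0) (fun d => derivable_pt_lim g x d /\ d <= K) (Hd x Hx)) as [Hs1 Hs2].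
    unfold dg. rewrite Rmin_right by auto. auto.
  - rewrite Rmin_left, Rmax_right by auto. auto.
  - rewrite Hc2. assert (dg c <= K) by apply Rmin_l. nra.
Qed.

Lemma MVT_abs_le_bound g K a b : a <= b ->
  (forall x, a < x < b -> exists d, derivable_pt_lim g x d /\ Rabs d <= K) ->
  (forall x, a <= x <= b -> continuity_pt g x) -> Rabs (g b - g a) <= K * (b - a).
Proof.
  intros Hab Hd Hc. apply Rabs_le. split.
  - enough (- g b - - g a <= K * (b - a)) by lra.
    apply (MVT_le_bound (fun x => - g x)); auto.
    + intros x Hx. destruct (Hd x Hx) as [d [H1 H2]]. exists (- d).
      split; [apply (derivable_pt_lim_opp g); auto | apply Rabs_le_between in H2; lra].
    + intros x Hx. apply (continuity_pt_opp g); auto.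
  - apply MVT_le_bound; auto. intros x Hx. destruct (Hd x Hx) as [d [H1 H2]].
    exists d; split; auto. apply Rabs_le_between in H2; lra.
Qed.

(** The grid point [m/n] just below the maximiser is within [1/n] of it. *)
Lemma uf_gap_to_limit f n rho K xs : convex_pos f -> (1 <= n)%nat -> 1 <= rho -> 0 <= K ->
  (forall x, 0 < x < 1 -> exists d, derivable_pt_lim (gf f rho) x d /\ d <= K) ->
  0 <= xs <= 1 -> is_max unit_interval (gf f rho) (gf f rho xs) ->
  0 <= gf f rho xs - uf f n rho /\ gf f rho xs - uf f n rho <= K / INR n.
Proof.
  intros Hf Hn Hr HK Hd Hxs Hmax.
  assert (Hp := convex_pos_continuous_pos f Hf).
  destruct (uf_is_max f n rho Hf Hn Hr) as [_ Hu].
  pose proof (grid_max_le f rho n _ _ Hn Hmax Hu). split; [lra|].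
  assert (1 <= INR n) by (apply (le_INR 1); lia).
  destruct (grid_below n xs Hn Hxs) as [m [Hm [Hm1 Hm2]]].
  assert (Hum := proj2 Hu m Hm). simpl in Hum.
  pose proof (proj1 (grid_in_unit_interval m n Hn Hm)).
  assert (Hmvt : gf f rho xs - gf f rho (INR m / INR n) <= K * (xs - INR m / INR n)).
  { apply MVT_le_bound; auto.
    - intros x Hx. apply Hd. lra.
    - intros x Hx. apply gf_continuity_pt; auto. lra. }
  assert (K * (xs - INR m / INR n) <= K / INR n) by (unfold Rdiv at 2; apply Rmult_le_compat_l; lra).
  lra.
Qed.

(** * The limit rho -> oo *)

Lemma convex_le_chord_from_0 f f0 N y : convex_pos f -> lim_right0 f f0 -> 0 < N -> 0 < y <= N ->
  f y <= y / N * f N + (1 - y / N) * f0.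
Proof.
  intros Hf Hl HN Hy. apply Rnot_lt_le. intros Hlt.
  set (gap := f y - (y / N * f N + (1 - y / N) * f0)).
  assert (Hg : 0 < gap) by (unfold gap; lra).
  destruct (Hl (gap / 2) ltac:(lra)) as [del [Hdel Hd]].
  set (C := Rabs (f N - f0)). assert (HC : 0 <= C) by apply Rabs_pos.
  (* a point [e] near [0], close enough that the chord through [e] is [gap]-close to the one through [0] *)
  set (e := Rmin (Rmin (del / 2) (y / 2)) (N * gap / (4 * (C + 1)))).
  assert (He1 : e <= del / 2) by (unfold e; eapply Rle_trans; [apply Rmin_l | apply Rmin_l]).
  assert (He2 : e <= y / 2) by (unfold e; eapply Rle_trans; [apply Rmin_l | apply Rmin_r]).
  assert (He3 : e <= N * gap / (4 * (C + 1))) by (unfold e; apply Rmin_r).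
  assert (He0 : 0 < e) by (unfold e; repeat apply Rmin_glb_lt; try lra; apply Rdiv_lt_0_compat; nra).
  set (s := (y - e) / (N - e)).
  assert (Hs : 0 <= s <= 1).
  { unfold s; split; [apply Rdiv_le_0_compat; lra|].
    apply Rmult_le_reg_r with (N - e); [lra|]; unfold Rdiv; rewrite Rmult_assoc, Rinv_l; lra. }
  assert (Hc := Hf N e s HN He0 Hs).
  replace (s * N + (1 - s) * e) with y in Hc by (unfold s; field; lra).
  assert (Hfe := Hd e ltac:(lra)). apply Rabs_lt_between in Hfe.
  assert (Hsd : Rabs (s - y / N) <= 2 * e / N).
  { replace (s - y / N) with (- (e * (N - y) / (N * (N - e)))) by (unfold s; field; lra).
    rewrite Rabs_Ropp, Rabs_right by (apply Rle_ge, Rdiv_le_0_compat; nra).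
    apply Rmult_le_reg_r with (N * (N - e)); [nra|]. unfold Rdiv.
    replace (e * (N - y) * / (N * (N - e)) * (N * (N - e))) with (e * (N - y)) by (field; lra).
    replace (2 * e * / N * (N * (N - e))) with (2 * e * (N - e)) by (field; lra). nra. }
  assert (Hprod : Rabs ((s - y / N) * (f N - f0)) <= 2 * e / N * C).
  { rewrite Rabs_mult. apply Rmult_le_compat; [apply Rabs_pos | apply Rabs_pos | exact Hsd | unfold C; lra]. }
  assert (H2eC : 2 * e / N * C < gap / 2).
  { apply Rle_lt_trans with (2 * (N * gap / (4 * (C + 1))) / N * C).
    - apply Rmult_le_compat_r; auto. unfold Rdiv; apply Rmult_le_compat_r; [left; apply Rinv_0_lt_compat|]; lra.
    - replace (2 * (N * gap / (4 * (C + 1))) / N * C) with (gap / 2 * (C / (C + 1))) by (field; lra).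
      assert (C / (C + 1) < 1)
        by (apply Rmult_lt_reg_r with (C + 1); [lra|]; unfold Rdiv; rewrite Rmult_assoc, Rinv_l; lra).
      nra. }
  apply Rabs_le_between in Hprod.
  assert (E : s * f N + (1 - s) * f e - (y / N * f N + (1 - y / N) * f0) =
              (s - y / N) * (f N - f0) + (1 - s) * (f e - f0)) by ring.
  assert ((1 - s) * (f e - f0) <= (1 - s) * (gap / 2)) by (apply Rmult_le_compat_l; lra).
  unfold gap in *. nra.
Qed.

Lemma Df_U_eq f n Q : Df f n Q (Un n) = rsum n (fun i => / INR n * f (INR n * Q i)).
Proof.
  unfold Df, Un. apply rsum_ext. intros i _.
  replace (Q i / / INR n) with (INR n * Q i) by (unfold Rdiv; rewrite Rinv_inv; ring). reflexivity.
Qed.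

Lemma uf_le_rho_limit f f0 n rho : convex_pos f -> lim_right0 f f0 -> (1 <= n)%nat -> 1 <= rho ->
  uf f n rho <= (1 - / INR n) * f0 + f (INR n) / INR n.
Proof.
  intros Hf Hl Hn Hr. destruct (uf_is_max f n rho Hf Hn Hr) as [[[Q [HQ HQv]] _] _].
  assert (1 <= INR n) by (apply (le_INR 1); lia).
  apply Pnr_iff in HQ as [Hp [Hs Hrat]]; auto.
  rewrite <- HQv, Df_U_eq.
  apply Rle_trans with (rsum n (fun i => / INR n * (Q i * f (INR n) + (1 - Q i) * f0))).
  - apply rsum_le. intros i Hi. apply Rmult_le_compat_l; [left; apply Rinv_0_lt_compat; lra|].
    assert (Hq : 0 < Q i <= 1)
      by (split; [auto | apply (pmf_entry_le_1 n Q); auto; intros; left; auto]).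
    assert (Hb := convex_le_chord_from_0 f f0 (INR n) (INR n * Q i) Hf Hl ltac:(lra) ltac:(split; nra)).
    replace (INR n * Q i / INR n) with (Q i) in Hb by (field; lra). auto.
  - rewrite (rsum_ext n _ (fun i => (/ INR n * (f (INR n) - f0)) * Q i + / INR n * f0)) by (intros; ring).
    rewrite rsum_plus, rsum_scal, rsum_const, Hs. right. field. lra.
Qed.

(** The vertex with a single mass at the upper level. *)
Lemma uf_ge_first_vertex f n r : convex_pos f -> (2 <= n)%nat -> 1 <= r ->
  / INR n * f (r * INR n / (INR n + r - 1)) + (1 - / INR n) * f (INR n / (INR n + r - 1)) <= uf f n r.
Proof.
  intros Hf Hn Hr. assert (2 <= INR n) by (apply (le_INR 2); lia).
  destruct (uf_is_max f n r Hf ltac:(lia) Hr) as [_ [_ Hm]].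
  assert (Hv := Hm 1%nat ltac:(lia)). unfold gf in Hv. simpl in Hv.
  replace (r / (1 + (r - 1) * (1 / INR n))) with (r * INR n / (INR n + r - 1)) in Hv by (field; lra).
  replace (1 / (1 + (r - 1) * (1 / INR n))) with (INR n / (INR n + r - 1)) in Hv by (field; lra).
  replace (1 / INR n) with (/ INR n) in Hv by (field; lra). exact Hv.
Qed.

Lemma continuity_pt_ball f x eps : continuity_pt f x -> 0 < eps ->
  exists del, 0 < del /\ forall y, Rabs (y - x) < del -> Rabs (f y - f x) < eps.
Proof.
  intros Hc He. destruct (Hc eps He) as [del [Hd H]]. exists del; split; auto.
  intros y Hy. destruct (Req_dec y x) as [->|Hne]; [rewrite Rminus_diag, Rabs_R0; auto|].
  apply (H y). split; [split; [exact I | auto] | exact Hy].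
Qed.

Lemma uf_rho_limit f f0 n : convex_pos f -> (2 <= n)%nat -> lim_right0 f f0 ->
  lim_infty (fun r => uf f n r) ((1 - / INR n) * f0 + f (INR n) / INR n).
Proof.
  intros Hf Hn Hl eps Heps. set (N := INR n).
  assert (HN : 2 <= N) by (unfold N; apply (le_INR 2); lia).
  destruct (continuity_pt_ball f N eps (convex_pos_continuity_pt f N Hf ltac:(lra)) Heps) as [d1 [Hd1 Hc1]].
  destruct (Hl eps Heps) as [d0 [Hd0 Hc0]].
  exists (1 + N * N / d1 + N / d0). intros r Hr.
  assert (0 < N * N / d1) by (apply Rdiv_lt_0_compat; nra).
  assert (0 < N / d0) by (apply Rdiv_lt_0_compat; nra).
  assert (Hr1 : 1 <= r) by lra.
  assert (Hrd1 : N * N < r * d1)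
    by (apply Rle_lt_trans with (N * N / d1 * d1); [right; field; lra | apply Rmult_lt_compat_r; lra]).
  assert (Hrd0 : N < r * d0)
    by (apply Rle_lt_trans with (N / d0 * d0); [right; field; lra | apply Rmult_lt_compat_r; lra]).
  assert (Hup := uf_le_rho_limit f f0 n r Hf Hl ltac:(lia) Hr1). fold N in Hup.
  assert (Hlo := uf_ge_first_vertex f n r Hf Hn Hr1). fold N in Hlo.
  set (D := N + r - 1) in *. assert (HD : r <= D) by (unfold D; lra).
  assert (Ha : Rabs (f (r * N / D) - f N) < eps).
  { apply Hc1. replace (r * N / D - N) with (- (N * (N - 1) / D)) by (unfold D; field; lra).
    rewrite Rabs_Ropp, Rabs_right by (apply Rle_ge, Rdiv_le_0_compat; nra).
    apply Rmult_lt_reg_r with D; [lra|]. unfold Rdiv; rewrite Rmult_assoc, Rinv_l by lra. nra. }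
  assert (Hb : Rabs (f (N / D) - f0) < eps).
  { apply Hc0. split; [apply Rdiv_lt_0_compat; lra|].
    apply Rmult_lt_reg_r with D; [lra|]. unfold Rdiv; rewrite Rmult_assoc, Rinv_l by lra. nra. }
  apply Rabs_lt_between in Ha. apply Rabs_lt_between in Hb. apply Rabs_lt_between.
  assert (0 < / N < 1) by (split; [apply Rinv_0_lt_compat; lra | rewrite <- Rinv_1; apply Rinv_lt_contravar; lra]).
  assert (/ N * (f (r * N / D) - f N) > / N * (- eps)) by (apply Rmult_lt_compat_l; lra).
  assert ((1 - / N) * (f (N / D) - f0) > (1 - / N) * (- eps)) by (apply Rmult_lt_compat_l; lra).
  unfold Rdiv in *. split; nra.
Qed.

Lemma uf_rho_diverges f n : convex_pos f -> (2 <= n)%nat -> div_right0 f -> div_infty (fun r => uf f n r).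
Proof.
  intros Hf Hn Hd A. set (N := INR n).
  assert (HN : 2 <= N) by (unfold N; apply (le_INR 2); lia).
  destruct (continuity_ab_min f 1 N ltac:(lra)) as [mn [Hmn _]].
  { intros c Hc. apply convex_pos_continuity_pt; auto; lra. }
  set (B := f mn).
  assert (0 < / N < 1) by (split; [apply Rinv_0_lt_compat; lra | rewrite <- Rinv_1; apply Rinv_lt_contravar; lra]).
  destruct (Hd ((A - / N * B) / (1 - / N))) as [del [Hdel Hc]].
  exists (1 + N / del). intros r Hr.
  assert (0 < N / del) by (apply Rdiv_lt_0_compat; nra).
  assert (Hr1 : 1 <= r) by lra.
  assert (Hrd0 : N < r * del)
    by (apply Rle_lt_trans with (N / del * del); [right; field; lra | apply Rmult_lt_compat_r; lra]).
  assert (Hlo := uf_ge_first_vertex f n r Hf Hn Hr1). fold N in Hlo.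
  set (D := N + r - 1) in *. assert (HD : r <= D) by (unfold D; lra).
  assert (Ha : B <= f (r * N / D)).
  { apply Hmn. split; apply Rmult_le_reg_r with D; try lra;
      unfold Rdiv; rewrite Rmult_assoc, Rinv_l by lra; unfold D; nra. }
  assert (Hb : (A - / N * B) / (1 - / N) < f (N / D)).
  { apply Hc. split; [apply Rdiv_lt_0_compat; lra|].
    apply Rmult_lt_reg_r with D; [lra|]. unfold Rdiv; rewrite Rmult_assoc, Rinv_l by lra. nra. }
  assert (Hb' : (1 - / N) * ((A - / N * B) / (1 - / N)) < (1 - / N) * f (N / D))
    by (apply Rmult_lt_compat_l; lra).
  replace ((1 - / N) * ((A - / N * B) / (1 - / N))) with (A - / N * B) in Hb' by (field; lra).
  assert (/ N * B <= / N * f (r * N / D)) by (apply Rmult_le_compat_l; lra).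
  lra.
Qed.

Lemma lim_infty_unique F L1 L2 : lim_infty F L1 -> lim_infty F L2 -> L1 = L2.
Proof.
  intros H1 H2. apply NNPP. intros Hne.
  assert (He : 0 < Rabs (L1 - L2) / 2) by (apply Rdiv_lt_0_compat; [apply Rabs_pos_lt; lra | lra]).
  destruct (H1 _ He) as [M1 HM1], (H2 _ He) as [M2 HM2].
  specialize (HM1 (Rmax M1 M2) (Rmax_l _ _)). specialize (HM2 (Rmax M1 M2) (Rmax_r _ _)).
  assert (Rabs (L1 - L2) <= Rabs (F (Rmax M1 M2) - L1) + Rabs (F (Rmax M1 M2) - L2)).
  { replace (L1 - L2) with (- (F (Rmax M1 M2) - L1) + (F (Rmax M1 M2) - L2)) by ring.
    rewrite <- (Rabs_Ropp (F (Rmax M1 M2) - L1)). apply Rabs_triang. }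
  lra.
Qed.

Lemma lim_right0_Lipschitz f f0 K b : lim_right0 f f0 -> 0 < b ->
  (forall x, 0 < x < b -> exists d, derivable_pt_lim f x d /\ Rabs d <= K) ->
  (forall x, 0 < x <= b -> continuity_pt f x) -> Rabs (f0 - f b) <= K * b.
Proof.
  intros Hl Hb Hd Hc. apply Rnot_lt_le. intros Hlt. set (eta := Rabs (f0 - f b) - K * b).
  destruct (Hl eta ltac:(unfold eta; lra)) as [d0 [Hd0 Hc0]].
  set (t := Rmin (d0 / 2) (b / 2)).
  assert (t <= d0 / 2) by apply Rmin_l. assert (t <= b / 2) by apply Rmin_r.
  assert (0 < t) by (apply Rmin_glb_lt; lra).
  assert (Hft := Hc0 t ltac:(lra)).
  assert (Hm : Rabs (f b - f t) <= K * (b - t)).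
  { apply MVT_abs_le_bound; [lra | intros x Hx; apply Hd; lra | intros x Hx; apply Hc; lra]. }
  assert (Rabs (f0 - f b) <= Rabs (f t - f0) + Rabs (f b - f t)).
  { replace (f0 - f b) with (- (f t - f0) + - (f b - f t)) by ring.
    eapply Rle_trans; [apply Rabs_triang|]. rewrite !Rabs_Ropp. lra. }
  assert (0 <= K) by (destruct (Hd (b / 2) ltac:(lra)) as [d [_ Hd']]; pose proof (Rabs_pos d); lra).
  assert (K * (b - t) <= K * b) by (apply Rmult_le_compat_l; lra).
  unfold eta in *. lra.
Qed.

(** Both masses of the first vertex, [rho N/D] and [N/D], are compared with their limits [N] and
    [0] by the mean value theorem. *)
Lemma uf_rho_gap f n rho f0 Kn : convex_pos f -> (2 <= n)%nat -> 1 <= rho -> lim_right0 f f0 ->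
  (forall t, 0 < t < INR n -> exists d, derivable_pt_lim f t d /\ Rabs d <= Kn) ->
  0 <= (1 - / INR n) * f0 + f (INR n) / INR n - uf f n rho <=
       2 * Kn * (INR n - 1) / (INR n + rho - 1).
Proof.
  intros Hf Hn Hr Hl Hdb.
  set (N := INR n) in *. assert (HN : 2 <= N) by (unfold N; apply (le_INR 2); lia).
  assert (Hup := uf_le_rho_limit f f0 n rho Hf Hl ltac:(lia) Hr). fold N in Hup.
  split; [lra|].
  assert (HK0 : 0 <= Kn) by (destruct (Hdb 1 ltac:(lra)) as [d [_ Hd]]; pose proof (Rabs_pos d); lra).
  assert (Hcont := convex_pos_continuous_pos f Hf).
  assert (Hlo := uf_ge_first_vertex f n rho Hf Hn Hr). fold N in Hlo.
  set (D := N + rho - 1) in *. assert (HD : rho <= D) by (unfold D; lra).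
  set (a := rho * N / D) in *. set (b := N / D) in *.
  assert (Ha : 1 <= a <= N).
  { unfold a. split; apply Rmult_le_reg_r with D; try lra;
      unfold Rdiv; rewrite Rmult_assoc, Rinv_l by lra; unfold D; nra. }
  assert (Hb : 0 < b <= 1).
  { unfold b. split; [apply Rdiv_lt_0_compat; lra|].
    apply Rmult_le_reg_r with D; [lra|]. unfold Rdiv; rewrite Rmult_assoc, Rinv_l by lra. unfold D; nra. }
  assert (H1 : Rabs (f N - f a) <= Kn * (N - a)).
  { apply MVT_abs_le_bound; [lra | intros x Hx; apply Hdb; lra | intros x Hx; apply Hcont; lra]. }
  assert (H2 : Rabs (f0 - f b) <= Kn * b).
  { apply lim_right0_Lipschitz; auto; [lra | intros x Hx; apply Hdb; lra | intros x Hx; apply Hcont; lra]. }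
  apply Rabs_le_between in H1. apply Rabs_le_between in H2.
  assert (0 < / N < 1) by (split; [apply Rinv_0_lt_compat; lra | rewrite <- Rinv_1; apply Rinv_lt_contravar; lra]).
  assert (/ N * (f N - f a) <= / N * (Kn * (N - a))) by (apply Rmult_le_compat_l; lra).
  assert ((1 - / N) * (f0 - f b) <= (1 - / N) * (Kn * b)) by (apply Rmult_le_compat_l; lra).
  assert (E : / N * (Kn * (N - a)) + (1 - / N) * (Kn * b) = 2 * Kn * (N - 1) / D)
    by (unfold a, b, D; field; lra).
  unfold Rdiv in *. lra.
Qed.

(** * Quadratic bounds *)

Lemma taylor_quadratic_lower f f1 f2 m lo hi :
  (forall t, lo <= t <= hi -> derivable_pt_lim f t (f1 t) /\ derivable_pt_lim f1 t (f2 t)) ->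
  lo <= 1 <= hi -> (forall t, lo <= t <= hi -> m <= f2 t) ->
  forall t, lo <= t <= hi -> f 1 + f1 1 * (t - 1) + m / 2 * (t - 1) ^ 2 <= f t.
Proof.
  intros Hd H1 Hm t Ht.
  set (h1 := fun y => f1 y - m * y).
  assert (Hh1 : forall y, lo <= y <= hi -> derivable_pt_lim h1 y (f2 y - m)).
  { intros y Hy. apply is_derive_Reals. unfold h1. apply (is_derive_minus f1 (fun y => m * y)).
    - apply is_derive_Reals, Hd; auto.
    - auto_derive; auto; ring. }
  assert (Hmono : forall x y, lo <= x -> x <= y -> y <= hi -> h1 x <= h1 y).
  { intros x y Hx Hxy Hy. destruct (Req_dec x y) as [->|Hne]; [lra|].
    destruct (MVT_cor2 h1 (fun y => f2 y - m) x y ltac:(lra)) as [c [Hc1 Hc2]].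
    - intros c Hc; apply Hh1; lra.
    - assert (m <= f2 c) by (apply Hm; lra). nra. }
  set (h0 := fun y => f y - f1 1 * y - m / 2 * (y - 1) ^ 2).
  assert (Hh0 : forall y, lo <= y <= hi -> derivable_pt_lim h0 y (h1 y - h1 1)).
  { intros y Hy. apply is_derive_Reals. unfold h0, h1.
    assert (Hq : is_derive (fun y => f1 1 * y + m / 2 * (y - 1) ^ 2) y (f1 1 + m * (y - 1)))
      by (auto_derive; [exact I | field]).
    assert (Hf : is_derive f y (f1 y)) by (apply is_derive_Reals, Hd; auto).
    assert (H := is_derive_minus _ _ _ _ _ Hf Hq).
    replace (f1 y - m * y - (f1 1 - m * 1)) with (minus (f1 y) (f1 1 + m * (y - 1)))
      by (unfold minus, plus, opp; simpl; ring).
    eapply is_derive_ext; [|exact H]. intros; simpl; unfold minus, plus, opp; simpl; ring. }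
  (* [h0] decreases up to [1] and increases after it *)
  assert (Hge : h0 1 <= h0 t).
  { destruct (Rtotal_order t 1) as [Hlt|[->|Hgt]]; [| lra |].
    - destruct (MVT_cor2 h0 (fun y => h1 y - h1 1) t 1 Hlt) as [c [Hc1 Hc2]].
      + intros c Hc; apply Hh0; lra.
      + assert (h1 c <= h1 1) by (apply Hmono; lra). nra.
    - destruct (MVT_cor2 h0 (fun y => h1 y - h1 1) 1 t Hgt) as [c [Hc1 Hc2]].
      + intros c Hc; apply Hh0; lra.
      + assert (h1 1 <= h1 c) by (apply Hmono; lra). nra. }
  unfold h0 in Hge. simpl in Hge. lra.
Qed.

Lemma taylor_quadratic_upper f f1 f2 M lo hi :
  (forall t, lo <= t <= hi -> derivable_pt_lim f t (f1 t) /\ derivable_pt_lim f1 t (f2 t)) ->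
  lo <= 1 <= hi -> (forall t, lo <= t <= hi -> f2 t <= M) ->
  forall t, lo <= t <= hi -> f t <= f 1 + f1 1 * (t - 1) + M / 2 * (t - 1) ^ 2.
Proof.
  intros Hd H1 HM t Ht.
  enough (- f 1 + - f1 1 * (t - 1) + - M / 2 * (t - 1) ^ 2 <= - f t) by lra.
  apply (taylor_quadratic_lower (fun y => - f y) (fun y => - f1 y) (fun y => - f2 y) (- M) lo hi); auto.
  - intros y Hy; destruct (Hd y Hy); split; apply derivable_pt_lim_opp; auto.
  - intros y Hy; specialize (HM y Hy); lra.
Qed.

Lemma norm2_sq n Q : norm2 n Q ^ 2 = rsum n (fun i => Q i ^ 2).
Proof. unfold norm2. apply pow2_sqrt, rsum_nonneg. intros; apply pow2_ge_0. Qed.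

(** Averaging a quadratic in [n Q i - 1] against [Un n]: the linear term vanishes since [sum Q = 1]. *)
Lemma rsum_U_quadratic n Q c0 c1 c2 : (1 <= n)%nat -> rsum n Q = 1 ->
  rsum n (fun i => / INR n * (c0 + c1 * (INR n * Q i - 1) + c2 * (INR n * Q i - 1) ^ 2)) =
  c0 + c2 * (INR n * norm2 n Q ^ 2 - 1).
Proof.
  intros Hn Hs. assert (1 <= INR n) by (apply (le_INR 1); lia). rewrite norm2_sq.
  rewrite (rsum_ext n _ (fun i => (/ INR n * (c0 - c1 + c2) + (c1 - 2 * c2) * Q i) + c2 * INR n * Q i ^ 2))
    by (intros; field; lra).
  rewrite !rsum_plus, rsum_const, !rsum_scal, Hs. field; lra.
Qed.

Lemma Df_U_ge_quadratic f f1 f2 m n rho Q : f 1 = 0 -> (1 <= n)%nat -> 1 <= rho ->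
  (forall t, / rho <= t <= rho -> derivable_pt_lim f t (f1 t) /\ derivable_pt_lim f1 t (f2 t)) ->
  (forall t, / rho <= t <= rho -> m <= f2 t) -> Pnr n rho Q ->
  / 2 * m * (INR n * norm2 n Q ^ 2 - 1) <= Df f n Q (Un n).
Proof.
  intros Hf1 Hn Hr Hd Hm HQ. assert (1 <= INR n) by (apply (le_INR 1); lia).
  assert (/ rho <= 1) by (rewrite <- Rinv_1; apply Rinv_le_contravar; lra).
  pose proof (proj1 (proj2 (proj1 (Pnr_iff n rho Q Hn) HQ))) as Hs.
  rewrite Df_U_eq.
  replace (/ 2 * m * (INR n * norm2 n Q ^ 2 - 1)) with (f 1 + m / 2 * (INR n * norm2 n Q ^ 2 - 1))
    by (rewrite Hf1; field).
  rewrite <- (rsum_U_quadratic n Q (f 1) (f1 1) (m / 2) Hn Hs).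
  apply rsum_le. intros i Hi. apply Rmult_le_compat_l; [left; apply Rinv_0_lt_compat; lra|].
  apply (taylor_quadratic_lower f f1 f2 m (/ rho) rho); [exact Hd | lra | exact Hm | apply Pnr_scaled_entry; auto].
Qed.

Lemma Df_U_le_quadratic f f1 f2 M n rho Q : f 1 = 0 -> (1 <= n)%nat -> 1 <= rho ->
  (forall t, / rho <= t <= rho -> derivable_pt_lim f t (f1 t) /\ derivable_pt_lim f1 t (f2 t)) ->
  (forall t, / rho <= t <= rho -> f2 t <= M) -> Pnr n rho Q ->
  Df f n Q (Un n) <= / 2 * M * (INR n * norm2 n Q ^ 2 - 1).
Proof.
  intros Hf1 Hn Hr Hd HM HQ. assert (1 <= INR n) by (apply (le_INR 1); lia).
  assert (/ rho <= 1) by (rewrite <- Rinv_1; apply Rinv_le_contravar; lra).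
  pose proof (proj1 (proj2 (proj1 (Pnr_iff n rho Q Hn) HQ))) as Hs.
  rewrite Df_U_eq.
  replace (/ 2 * M * (INR n * norm2 n Q ^ 2 - 1)) with (f 1 + M / 2 * (INR n * norm2 n Q ^ 2 - 1))
    by (rewrite Hf1; field).
  rewrite <- (rsum_U_quadratic n Q (f 1) (f1 1) (M / 2) Hn Hs).
  apply rsum_le. intros i Hi. apply Rmult_le_compat_l; [left; apply Rinv_0_lt_compat; lra|].
  apply (taylor_quadratic_upper f f1 f2 M (/ rho) rho); [exact Hd | lra | exact HM | apply Pnr_scaled_entry; auto].
Qed.

Lemma chi2_convex : convex_pos chi2.
Proof.
  intros x y t Hx Hy Ht. unfold chi2.
  assert (0 <= t * (1 - t) * (x - y) ^ 2) by (apply Rmult_le_pos; [nra | apply pow2_ge_0]). nra.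
Qed.

Lemma Df_chi2_U n Q : (1 <= n)%nat -> rsum n Q = 1 -> Df chi2 n Q (Un n) = INR n * norm2 n Q ^ 2 - 1.
Proof.
  intros Hn Hs. rewrite Df_U_eq.
  replace (INR n * norm2 n Q ^ 2 - 1) with (0 + 1 * (INR n * norm2 n Q ^ 2 - 1)) by ring.
  rewrite <- (rsum_U_quadratic n Q 0 0 1 Hn Hs). apply rsum_ext. intros; unfold chi2; ring.
Qed.

Lemma norm2_sq_ge n Q : (1 <= n)%nat -> rsum n Q = 1 -> 1 <= INR n * norm2 n Q ^ 2.
Proof.
  intros Hn Hs. pose proof (Df_chi2_U n Q Hn Hs).
  assert (0 <= Df chi2 n Q (Un n)); [|lra].
  apply rsum_nonneg. intros i _. unfold Un, chi2.
  apply Rmult_le_pos; [left; apply Rinv_0_lt_compat, lt_0_INR; lia | apply pow2_ge_0].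
Qed.

(** [g_chi2 x = (rho-1)^2 x (1-x) / (1+(rho-1)x)^2]; its maximum is at [x = 1/(rho+1)]. *)
Lemma gf_chi2_le rho x : 1 <= rho -> 0 <= x <= 1 -> gf chi2 rho x <= (rho - 1) ^ 2 / (4 * rho).
Proof.
  intros Hr Hx. unfold gf, chi2. set (D := 1 + (rho - 1) * x). assert (HD : 1 <= D) by (unfold D; nra).
  replace (x * (rho / D - 1) ^ 2 + (1 - x) * (1 / D - 1) ^ 2) with ((rho - 1) ^ 2 * (x * (1 - x)) / D ^ 2)
    by (unfold D in *; field; lra).
  apply Rmult_le_reg_r with (4 * rho * D ^ 2); [nra|].
  replace ((rho - 1) ^ 2 * (x * (1 - x)) / D ^ 2 * (4 * rho * D ^ 2))
    with ((rho - 1) ^ 2 * (4 * rho * x * (1 - x))) by (field; lra).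
  replace ((rho - 1) ^ 2 / (4 * rho) * (4 * rho * D ^ 2)) with ((rho - 1) ^ 2 * D ^ 2) by (field; lra).
  apply Rmult_le_compat_l; [apply pow2_ge_0|].
  assert (D ^ 2 - 4 * rho * x * (1 - x) = (1 - (rho + 1) * x) ^ 2) by (unfold D; ring).
  pose proof (pow2_ge_0 (1 - (rho + 1) * x)). lra.
Qed.

Lemma norm2_sq_Pnr_le n rho Q : (1 <= n)%nat -> 1 <= rho -> Pnr n rho Q ->
  INR n * norm2 n Q ^ 2 - 1 <= (rho - 1) ^ 2 / (4 * rho).
Proof.
  intros Hn Hr HQ. destruct (uf_is_max chi2 n rho chi2_convex Hn Hr) as [[_ Hmax] [[m [Hm Hv]] _]].
  pose proof (proj1 (proj2 (proj1 (Pnr_iff n rho Q Hn) HQ))) as Hs.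
  rewrite <- Df_chi2_U by auto. eapply Rle_trans; [apply Hmax; auto|]. rewrite <- Hv.
  apply gf_chi2_le, grid_in_unit_interval; auto.
Qed.

Lemma Df_U_quadratic_bounds f f1 f2 m M n rho Q : f 1 = 0 -> (1 <= n)%nat -> 1 <= rho ->
  twice_diff_pos f f1 f2 -> 0 <= m -> (forall t, / rho <= t <= rho -> m <= f2 t <= M) -> Pnr n rho Q ->
  0 <= / 2 * m * (INR n * norm2 n Q ^ 2 - 1) /\
  / 2 * m * (INR n * norm2 n Q ^ 2 - 1) <= Df f n Q (Un n) /\
  Df f n Q (Un n) <= / 2 * M * (INR n * norm2 n Q ^ 2 - 1) /\
  / 2 * M * (INR n * norm2 n Q ^ 2 - 1) <= M * (rho - 1) ^ 2 / (8 * rho).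
Proof.
  intros Hf1 Hn Hr Htd Hm Hb HQ.
  assert (0 < / rho) by (apply Rinv_0_lt_compat; lra).
  assert (Hd : forall t, / rho <= t <= rho -> derivable_pt_lim f t (f1 t) /\ derivable_pt_lim f1 t (f2 t))
    by (intros t Ht; apply Htd; lra).
  pose proof (proj1 (proj2 (proj1 (Pnr_iff n rho Q Hn) HQ))) as Hs.
  pose proof (norm2_sq_ge n Q Hn Hs).
  assert (/ rho <= 1) by (rewrite <- Rinv_1; apply Rinv_le_contravar; lra).
  assert (HmM : m <= M) by (destruct (Hb 1 ltac:(lra)); lra).
  repeat split.
  - apply Rmult_le_pos; lra.
  - apply (Df_U_ge_quadratic f f1 f2 m n rho); auto. intros t Ht; apply Hb; auto.
  - apply (Df_U_le_quadratic f f1 f2 M n rho); auto. intros t Ht; apply Hb; auto.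
  - pose proof (norm2_sq_Pnr_le n rho Q Hn Hr HQ).
    replace (M * (rho - 1) ^ 2 / (8 * rho)) with (/ 2 * M * ((rho - 1) ^ 2 / (4 * rho))) by (field; lra).
    apply Rmult_le_compat_l; lra.
Qed.

(** [(rho - 1)^2 <= 2 a rho] with [a = 4d/M] is exactly [rho] lying between the roots
    [1 + a -+ sqrt(2a + a^2)]. *)
Lemma Df_U_le_of_rho_small f f1 f2 Mf d n rho Q : f 1 = 0 -> (1 <= n)%nat -> 1 <= rho ->
  0 < d -> 0 < Mf -> twice_diff_pos f f1 f2 -> (forall t, 0 < t -> f2 t <= Mf) ->
  rho <= 1 + 4 * d / Mf + sqrt (8 * d / Mf + 16 * d ^ 2 / Mf ^ 2) -> Pnr n rho Q ->
  Df f n Q (Un n) <= d.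
Proof.
  intros Hf1 Hn Hr Hd HM Htd Hb Hrho HQ.
  assert (0 < / rho) by (apply Rinv_0_lt_compat; lra).
  assert (Hup : Df f n Q (Un n) <= / 2 * Mf * (INR n * norm2 n Q ^ 2 - 1)).
  { apply (Df_U_le_quadratic f f1 f2 Mf n rho); auto; intros t Ht; [apply Htd | apply Hb]; lra. }
  pose proof (norm2_sq_Pnr_le n rho Q Hn Hr HQ) as Hc.
  apply Rmult_le_compat_l with (r := / 2 * Mf) in Hc; [|lra].
  set (a := 4 * d / Mf) in *. assert (Ha : 0 < a) by (unfold a; apply Rdiv_lt_0_compat; lra).
  replace (8 * d / Mf + 16 * d ^ 2 / Mf ^ 2) with (2 * a + a ^ 2) in Hrho by (unfold a; field; lra).
  set (s := sqrt (2 * a + a ^ 2)) in *.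
  assert (Hs0 : 0 <= s) by apply sqrt_pos.
  assert (Hs2 : s ^ 2 = 2 * a + a ^ 2) by (apply pow2_sqrt; nra).
  assert (Hy : (rho - 1) ^ 2 <= 2 * a * rho).
  { assert ((rho - 1 - a - s) * (rho - 1 - a + s) <= 0) by (apply Rmult_le_0_r; nra). nra. }
  assert (/ 2 * Mf * ((rho - 1) ^ 2 / (4 * rho)) <= d).
  { apply Rmult_le_reg_r with (8 * rho); [lra|].
    replace (/ 2 * Mf * ((rho - 1) ^ 2 / (4 * rho)) * (8 * rho)) with (Mf * (rho - 1) ^ 2) by (field; lra).
    apply Rle_trans with (Mf * (2 * a * rho)); [apply Rmult_le_compat_l; lra|].
    unfold a. right; field; lra. }
  lra.
Qed.

(** * Compactness *)

Lemma strict_incr_lt (phi : nat -> nat) : (forall k, (phi k < phi (S k))%nat) ->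
  forall a b, (a < b)%nat -> (phi a < phi b)%nat.
Proof.
  intros H a b Hab. induction b as [|b IH]; [lia|].
  destruct (Nat.eq_dec a b) as [->|]; auto. specialize (IH ltac:(lia)). specialize (H b). lia.
Qed.

Lemma strict_incr_ge (phi : nat -> nat) : (forall k, (phi k < phi (S k))%nat) -> forall k, (k <= phi k)%nat.
Proof. intros H k. induction k; [lia|]. specialize (H k). lia. Qed.

Lemma Un_cv_subseq u l (phi : nat -> nat) : Un_cv u l -> (forall k, (phi k < phi (S k))%nat) ->
  Un_cv (fun k => u (phi k)) l.
Proof.
  intros Hu Hp eps He. destruct (Hu eps He) as [N HN]. exists N. intros k Hk. apply HN.
  pose proof (strict_incr_ge phi Hp k). lia.
Qed.

(** Bolzano-Weierstrass: turn the accumulation point into a convergent subsequence, choosing the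
    [k]-th index beyond the previous one and within [1/(k+1)] of the limit. *)
Lemma bounded_cv_subseq (u : nat -> R) : (forall k, 0 <= u k <= 1) ->
  exists phi l, (forall k, (phi k < phi (S k))%nat) /\ Un_cv (fun k => u (phi k)) l.
Proof.
  intros Hb. destruct (Bolzano_Weierstrass u (fun c => 0 <= c <= 1) (compact_P3 0 1) Hb) as [l Hl].
  assert (Hsel : forall N k, exists p, (N <= p)%nat /\ Rabs (u p - l) < / INR (S k)).
  { intros N k. assert (Hpos : 0 < / INR (S k)) by (apply Rinv_0_lt_compat, lt_0_INR; lia).
    destruct (Hl (fun y => Rabs (y - l) < / INR (S k)) N) as [p [Hp1 Hp2]].
    - exists (mkposreal _ Hpos). intros y Hy. auto.
    - exists p; auto. }
  set (sel := fun N k => epsilon (inhabits 0%nat) (fun p => (N <= p)%nat /\ Rabs (u p - l) < / INR (S k))).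
  assert (Hs : forall N k, (N <= sel N k)%nat /\ Rabs (u (sel N k) - l) < / INR (S k))
    by (intros N k; unfold sel; apply epsilon_spec; apply Hsel).
  set (phi := fix phi (k : nat) : nat := match k with O => sel O O | S j => sel (S (phi j)) (S j) end).
  exists phi, l. split.
  - intros k. simpl. destruct (Hs (S (phi k)) (S k)). lia.
  - intros eps He. destruct (INR_archimed eps 1 He) as [N HN]. exists N. intros k Hk.
    unfold R_dist. assert (Hk' : Rabs (u (phi k) - l) < / INR (S k)) by (destruct k; simpl; apply Hs).
    assert (0 < INR N) by (destruct N; simpl in HN; [lra | apply lt_0_INR; lia]).
    assert (INR N <= INR (S k)) by (apply le_INR; lia).
    assert (/ INR (S k) <= / INR N) by (apply Rinv_le_contravar; auto).
    assert (/ INR N < eps) by (apply Rmult_lt_reg_l with (INR N); [lra|]; rewrite Rinv_r by lra; lra).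
    lra.
Qed.

Lemma bounded_cv_subseq_n n (Qs : nat -> nat -> R) : (forall k i, (1 <= i <= n)%nat -> 0 <= Qs k i <= 1) ->
  exists phi L, (forall k, (phi k < phi (S k))%nat) /\
    forall i, (1 <= i <= n)%nat -> Un_cv (fun k => Qs (phi k) i) (L i).
Proof.
  induction n as [|n IH]; intros Hb.
  - exists (fun k => k), (fun _ => 0). split; intros; lia.
  - destruct IH as [phi [L [Hphi HL]]]; [intros k i Hi; apply Hb; lia|].
    destruct (bounded_cv_subseq (fun k => Qs (phi k) (S n))) as [psi [l [Hpsi Hl]]]; [intros k; apply Hb; lia|].
    exists (fun k => phi (psi k)), (fun i => if (i =? S n)%nat then l else L i). split.
    + intros k. apply strict_incr_lt; auto.
    + intros i Hi. destruct (Nat.eqb_spec i (S n)) as [->|]; auto.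
      apply (Un_cv_subseq (fun k => Qs (phi k) i)); auto. apply HL; lia.
Qed.

Lemma Un_cv_ge_const u l a : Un_cv u l -> (forall k, a <= u k) -> a <= l.
Proof.
  intros Hu H. apply (Rle_cv_lim (Un := fun _ => a) (Vn := u)); auto.
  intros e He; exists O; intros; rewrite R_dist_eq; auto.
Qed.

Lemma Pnr_seq_compact n rho : (1 <= n)%nat -> 1 <= rho -> seq_compact n (Pnr n rho).
Proof.
  intros Hn Hr Qs HQs. assert (1 <= INR n) by (apply (le_INR 1); lia).
  assert (HP : forall k, Pnr_pairwise n rho (Qs k)) by (intros k; apply Pnr_iff; auto).
  assert (Hb : forall k i, (1 <= i <= n)%nat -> 0 <= Qs k i <= 1).
  { intros k i Hi. destruct (HP k) as [Hp [Hs _]].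
    split; [left; auto | apply (pmf_entry_le_1 n); auto; intros; left; auto]. }
  destruct (bounded_cv_subseq_n n Qs Hb) as [phi [L [Hphi HL]]].
  exists phi, L. split; [auto | split; [|auto]]. apply Pnr_iff; auto. repeat split.
  - intros i Hi. apply Rlt_le_trans with (/ (INR n * rho)); [apply Rinv_0_lt_compat; nra|].
    apply (Un_cv_ge_const _ _ _ (HL i Hi)). intros k. apply (Pnr_pairwise_ge n rho); auto.
  - apply (UL_sequence (fun k => rsum n (Qs (phi k)))); [apply rsum_cv; auto|].
    intros e He; exists O; intros k _. rewrite (proj1 (proj2 (HP (phi k)))), R_dist_eq; auto.
  - intros i j Hi Hj.
    assert (Hc : Un_cv (fun k => rho * Qs (phi k) j - Qs (phi k) i) (rho * L j - L i)).
    { apply CV_minus; auto. apply CV_mult; auto. intros e He; exists O; intros; rewrite R_dist_eq; auto. }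
    enough (0 <= rho * L j - L i) by lra.
    apply (Un_cv_ge_const _ _ _ Hc). intros k.
    pose proof (proj2 (proj2 (HP (phi k))) i j Hi Hj). lra.
Qed.

Lemma uf_le_gf_max f n rho : convex_pos f -> (1 <= n)%nat -> 1 <= rho ->
  uf f n rho <= maxval unit_interval (gf f rho).
Proof.
  intros Hf Hn Hr.
  destruct (gf_max_attained f rho (convex_pos_continuous_pos f Hf) Hr) as [xs [_ [-> Hmax]]].
  apply (grid_max_le f rho n); auto. apply uf_is_max; auto.
Qed.

Lemma vf_le_gf_max f n rho : convex_pos f -> (1 <= n)%nat -> 1 <= rho ->
  vf f n rho <= maxval unit_interval (gf (fstar f) rho).
Proof.
  intros Hf Hn Hr.
  destruct (gf_max_attained (fstar f) rho (fstar_continuous_pos f (convex_pos_continuous_pos f Hf)) Hr)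
    as [xs [_ [-> Hmax]]].
  apply (grid_max_le (fstar f) rho n); auto. apply vf_is_max; auto.
Qed.

Lemma uf_cv f rho : convex_pos f -> 1 <= rho -> Un_cv (fun k => uf f k rho) (maxval unit_interval (gf f rho)).
Proof.
  intros Hf Hr. assert (Hp := convex_pos_continuous_pos f Hf).
  destruct (gf_max_attained f rho Hp Hr) as [xs [Hxs [-> Hmax]]].
  apply grid_max_cv; auto. intros k Hk. apply uf_is_max; auto.
Qed.

Lemma vf_cv f rho : convex_pos f -> 1 <= rho -> Un_cv (fun k => vf f k rho) (maxval unit_interval (hv f rho)).
Proof.
  intros Hf Hr. assert (Hp := fstar_continuous_pos f (convex_pos_continuous_pos f Hf)).
  destruct (gf_max_attained (fstar f) rho Hp Hr) as [xs [Hxs [_ Hmax]]].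
  rewrite (maxval_of_is_max _ _ (gf (fstar f) rho xs))
    by (apply (is_max_ext _ (gf (fstar f) rho)); auto; intros x Hx; apply gf_fstar_hv; auto).
  apply grid_max_cv; auto. intros k Hk. apply vf_is_max; auto.
Qed.

Lemma uf_limit_gap f n rho K L : convex_pos f -> (1 <= n)%nat -> 1 <= rho -> 0 <= K ->
  (forall x, 0 < x < 1 -> exists d, derivable_pt_lim (gf f rho) x d /\ d <= K) ->
  Un_cv (fun k => uf f k rho) L -> 0 <= L - uf f n rho /\ L - uf f n rho <= K / INR n.
Proof.
  intros Hf Hn Hr HK Hd HL.
  destruct (gf_max_attained f rho (convex_pos_continuous_pos f Hf) Hr) as [xs [Hxs [E Hmax]]].
  rewrite (UL_sequence _ _ _ HL (uf_cv f rho Hf Hr)), E. apply uf_gap_to_limit; auto.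
Qed.

Lemma uf_eq_max_Qbeta f n rho : convex_pos f -> (1 <= n)%nat -> 1 < rho ->
  uf f n rho = maxval (Gamma_n n rho) (fun b => Df f n (Qbeta n rho b) (Un n)).
Proof.
  intros Hf Hn Hr. destruct (uf_is_max f n rho Hf Hn ltac:(lra)) as [H1 H2].
  symmetry. apply maxval_of_is_max.
  apply (Qbeta_is_max (fun i p => Un n i * f (p / Un n i)) n rho (gf f rho)); auto.
  - intros T. apply Df_vertex_U; auto; lra.
  - apply gf_1_eq_gf_0; lra.
Qed.

Lemma vf_eq_max_Qbeta f n rho : convex_pos f -> (1 <= n)%nat -> 1 < rho ->
  vf f n rho = maxval (Gamma_n n rho) (fun b => Df f n (Un n) (Qbeta n rho b)).
Proof.
  intros Hf Hn Hr. destruct (vf_is_max f n rho Hf Hn ltac:(lra)) as [H1 H2].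
  symmetry. apply maxval_of_is_max.
  apply (Qbeta_is_max (fun i p => p * f (Un n i / p)) n rho (gf (fstar f) rho)); auto.
  - intros T. apply Df_U_vertex; auto; lra.
  - apply gf_1_eq_gf_0; lra.
Qed.

Lemma uf_rho_limit_gap f n rho f0 Kn Lu : convex_pos f -> (2 <= n)%nat -> 1 <= rho -> lim_right0 f f0 ->
  (forall t, 0 < t < INR n -> exists d, derivable_pt_lim f t d) ->
  is_lub (fun y => exists t d, 0 < t < INR n /\ derivable_pt_lim f t d /\ y = Rabs d) Kn ->
  lim_infty (fun r => uf f n r) Lu ->
  0 <= Lu - uf f n rho /\ Lu - uf f n rho <= 2 * Kn * (INR n - 1) / (INR n + rho - 1).
Proof.
  intros Hf Hn Hr Hl Hder [Hub _] HLu.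
  rewrite <- (lim_infty_unique _ _ _ (uf_rho_limit f f0 n Hf Hn Hl) HLu).
  apply uf_rho_gap; auto.
  intros t Ht. destruct (Hder t Ht) as [d Hd]. exists d; split; auto. apply Hub. exists t, d; auto.
Qed.

Theorem theorem7 (f : R -> R) (n : nat) (rho : R)
  (Hconv : convex_pos f) (Hf1 : f 1 = 0) (Hn : (2 <= n)%nat) (Hrho : 1 <= rho) :
  (* (a) *)
  ((exists Q, Pnr n rho Q) /\ convex_set (Pnr n rho) /\ seq_compact n (Pnr n rho))
  /\
  (* (b) *)
  (forall Q, pmf n Q -> full_support n Q ->
     (exists P, Pnr n rho P /\ forall P', Pnr n rho P' -> Df f n P' Q <= Df f n P Q) /\
     (exists P, Pnr n rho P /\ forall P', Pnr n rho P' -> Df f n Q P' <= Df f n Q P))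
  /\
  (* (c) *)
  (1 < rho ->
     (forall b, Gamma_n n rho b -> Pnr n rho (Qbeta n rho b)) /\
     uf f n rho = maxval (Gamma_n n rho) (fun b => Df f n (Qbeta n rho b) (Un n)) /\
     vf f n rho = maxval (Gamma_n n rho) (fun b => Df f n (Un n) (Qbeta n rho b)))
  /\
  (* (d) *)
  (maxval (fun m => (m <= n)%nat) (fun m => gf f rho (INR m / INR n)) <= uf f n rho /\
   uf f n rho <= maxval unit_interval (gf f rho) /\
   maxval (fun m => (m <= n)%nat) (fun m => gf (fstar f) rho (INR m / INR n)) <= vf f n rho /\
   vf f n rho <= maxval unit_interval (gf (fstar f) rho))
  /\
  (* (e) *)
  (Un_cv (fun k => uf f k rho) (maxval unit_interval (gf f rho)) /\
   Un_cv (fun k => vf f k rho) (maxval unit_interval (hv f rho)))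
  /\
  (* (f) *)
  (forall K, 0 <= K ->
     (forall x, 0 < x < 1 -> exists d, derivable_pt_lim (gf f rho) x d /\ d <= K) ->
     forall L, Un_cv (fun k => uf f k rho) L ->
       0 <= L - uf f n rho /\ L - uf f n rho <= K / INR n)
  /\
  (* (g) *)
  ((forall f0, lim_right0 f f0 ->
      lim_infty (fun r => uf f n r) ((1 - / INR n) * f0 + f (INR n) / INR n)) /\
   (div_right0 f -> div_infty (fun r => uf f n r)) /\
   (forall f0, lim_right0 f f0 ->
      (forall t, 0 < t < INR n -> exists d, derivable_pt_lim f t d) ->
      forall Kn, is_lub (fun y => exists t d, 0 < t < INR n /\
                           derivable_pt_lim f t d /\ y = Rabs d) Kn ->
      forall Lu, lim_infty (fun r => uf f n r) Lu ->
        0 <= Lu - uf f n rho /\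
        Lu - uf f n rho <= 2 * Kn * (INR n - 1) / (INR n + rho - 1)))
  /\
  (* (h) *)
  ((forall f1 f2 m M, twice_diff_pos f f1 f2 -> 0 <= m ->
      (forall t, / rho <= t <= rho -> m <= f2 t <= M) ->
      forall Q, Pnr n rho Q ->
        0 <= / 2 * m * (INR n * norm2 n Q ^ 2 - 1) /\
        / 2 * m * (INR n * norm2 n Q ^ 2 - 1) <= Df f n Q (Un n) /\
        Df f n Q (Un n) <= / 2 * M * (INR n * norm2 n Q ^ 2 - 1) /\
        / 2 * M * (INR n * norm2 n Q ^ 2 - 1) <= M * (rho - 1) ^ 2 / (8 * rho)) /\
   (forall Q, Pnr n rho Q -> Df chi2 n Q (Un n) = INR n * norm2 n Q ^ 2 - 1))
  /\
  (* (i) *)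
  (forall d f1 f2 Mf, 0 < d -> 0 < Mf -> twice_diff_pos f f1 f2 ->
     (forall t, 0 < t -> f2 t <= Mf) ->
     rho <= 1 + 4 * d / Mf + sqrt (8 * d / Mf + 16 * d ^ 2 / Mf ^ 2) ->
     forall Q, Pnr n rho Q -> Df f n Q (Un n) <= d).
Proof.
  assert (Hn1 : (1 <= n)%nat) by lia.
  destruct (uf_is_max f n rho Hconv Hn1 Hrho) as [_ Hu].
  destruct (vf_is_max f n rho Hconv Hn1 Hrho) as [_ Hv].
  split; [|split; [|split; [|split; [|split; [|split; [|split; [|split]]]]]]].
  - split; [exists (vertex n rho (fun _ => true)); apply vertex_Pnr; auto|].
    split; [apply Pnr_convex | apply Pnr_seq_compact]; auto.
  - intros Q _ HQ. split; [apply Df_left_max_attained | apply Df_right_max_attained]; auto.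
  - intros Hr. split; [intros b Hb; apply Qbeta_Pnr; auto|].
    split; [apply uf_eq_max_Qbeta | apply vf_eq_max_Qbeta]; auto.
  - rewrite (maxval_of_is_max _ _ _ Hu), (maxval_of_is_max _ _ _ Hv).
    repeat split; try lra; [apply uf_le_gf_max | apply vf_le_gf_max]; auto.
  - split; [apply uf_cv | apply vf_cv]; auto.
  - intros K HK Hd L HL. apply uf_limit_gap; auto.
  - split; [|split]; [intros f0 Hl; apply uf_rho_limit | intros Hd; apply uf_rho_diverges |
                      intros f0 Hl Hder Kn HKn Lu HLu; apply (uf_rho_limit_gap f n rho f0)]; auto.
  - split; [intros f1 f2 m M Htd Hm Hb Q HQ; apply (Df_U_quadratic_bounds f f1 f2); auto|].
    intros Q HQ. apply Df_chi2_U; auto. apply (Pnr_iff n rho Q Hn1) in HQ as [_ [Hs _]]; auto.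
  - intros d f1 f2 Mf Hd HM Htd Hb Hr Q HQ. apply (Df_U_le_of_rho_small f f1 f2 Mf d n rho); auto.
Qed.
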